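(* Let an extended spinor connection on $N$ be given, with spatial covariant differentiation $\nabla$, and let $\mathbf X,\mathbf Y$ be extended vector fields (components $X^i,Y^j$). In every equipped chart define the torsion $T^k_{ij}=\Gamma^k_{ij}-\Gamma^k_{ji}-c^k_{ij}$ and $\mathbf T(\mathbf X,\mathbf Y)^k=\sum_{i,j}T^k_{ij}X^iY^j$. For any function $F$ on the chart of $N$ let $$\mathcal D_iF=\sum_k\Upsilon^k_i\frac{\partial F}{\partial x^k}-\sum_{P=1}^J\sum_{I,J}(L_i\mathbf S[P])^I_J\frac{\partial F}{\partial S[P]^I_J}-\sum_{P=1}^J\sum_{I',J'}(L_i\tau(\mathbf S[P]))^{I'}_{J'}\frac{\partial F}{\partial\tau(S[P])^{I'}_{J'}},$$ and define the curvature components $$\mathfrak R^p_{qij}=\mathcal D_i\mathrm A^p_{j\,q}-\mathcal D_j\mathrm A^p_{i\,q}+\sum_{h=1}^2(\mathrm A^p_{i\,h}\mathrm A^h_{j\,q}-\mathrm A^p_{j\,h}\mathrm A^h_{i\,q})-\sum_{k=0}^3c^k_{ij}\mathrm A^p_{k\,q},$$ $$\bar{\mathfrak R}^p_{qij}=\mathcal D_i\bar{\mathrm A}^p_{j\,q}-\mathcal D_j\bar{\mathrm A}^p_{i\,q}+\sum_{h=1}^2(\bar{\mathrm A}^p_{i\,h}\bar{\mathrm A}^h_{j\,q}-\bar{\mathrm A}^p_{j\,h}\bar{\mathrm A}^h_{i\,q})-\sum_{k=0}^3c^k_{ij}\bar{\mathrm A}^p_{k\,q},$$ $$R^p_{qij}=\mathcal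 D_i\Gamma^p_{j\,q}-\mathcal D_j\Gamma^p_{i\,q}+\sum_{h=0}^3(\Gamma^p_{i\,h}\Gamma^h_{j\,q}-\Gamma^p_{j\,h}\Gamma^h_{i\,q})-\sum_{k=0}^3c^k_{ij}\Gamma^p_{k\,q}.$$ Let $\mathfrak N^p_q=\sum_{i,j}\mathfrak R^p_{qij}X^iY^j$, $\bar{\mathfrak N}^p_q=\sum_{i,j}\bar{\mathfrak R}^p_{qij}X^iY^j$, $N^p_q=\sum_{i,j}R^p_{qij}X^iY^j$ (extended fields of types $(1,1|0,0|0,0)$, $(0,0|1,1|0,0)$, $(0,0|0,0|1,1)$), and for $Q=1,\dots,J$ put $\mathbf U[Q]=-D(\mathfrak N,\bar{\mathfrak N},\mathbf N)\mathbf S[Q]$, $\bar{\mathbf U}[Q]=-D(\mathfrak N,\bar{\mathfrak N},\mathbf N)\tau(\mathbf S[Q])$. Then, as operators on extended spin-tensorial fields of every type, $$[\nabla_{\mathbf X},\nabla_{\mathbf Y}]=\nabla_{\mathbf U}+\sum_{Q=1}^J\vec\nabla_{\mathbf U[Q]}[Q]+\sum_{Q=1}^J\bar{\vec\nabla}_{\bar{\mathbf U}[Q]}[Q]+D(\mathfrak N,\bar{\mathfrak N},\mathbf N),$$ where $\mathbf U=\nabla_{\mathbf X}\mathbf Y-\nabla_{\mathbf Y}\mathbf X-\mathbf T(\mathbf X,\mathbf Y)$.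
   Context: Setting. $M$ is a 4-dimensional oriented, time-polarized space-time manifold with metric of signature $(+,-,-,-)$, with a spinor bundle $SM$. An equipped local chart has coordinates $x^0,\dots,x^3$, a spinor frame $\Psi_1,\Psi_2$ and associated tangent frame $\Upsilon_i=\sum_k\Upsilon^k_i\partial/\partial x^k$ ($i=0,..,3$); $c^k_{ij}$ are defined by $[\Upsilon_i,\Upsilon_j]=\sum_kc^k_{ij}\Upsilon_k$. A spin-tensor of type $(\alpha,\beta|\nu,\gamma|m,n)$ has components $X^{i_1\dots i_\alpha\bar i_1\dots\bar i_\nu h_1\dots h_m}_{j_1\dots j_\beta\bar j_1\dots\bar j_\gamma k_1\dots k_n}$ (spinor indices in $\{1,2\}$, tensor indices in $\{0,..,3\}$). The semilinear map $\tau$ sends type $(\alpha,\beta|\nu,\gamma|m,n)$ to $(\nu,\gamma|\alpha,\beta|m,n)$ by $\tau(S)^{i_1\dots i_\nu\bar i_1\dots\bar i_\alpha h}_{j_1\dots j_\gamma\bar j_1\dots\bar j_\beta k}=\overline{S^{\bar i_1\dots\bar i_\alpha i_1\dots i_\nu h}_{\bar j_1\dots\bar j_\beta j_1\dots j_\gamma k}}$. Composite bundle. Fix types $(\alpha_P,\beta_P|\nu_P,\gamma_P|m_P,n_P)$, $P=1,\dots,J$; $N$ is the direct sum of the corresponding spin-tensor bundles, a point being $q=(p,\mathbf S[1],\dots,\mathbf S[J])$; local coordinates $x^0,..,x^3$ and the components of all $\mathbf S[P]$. An extended spin-tensorial field of a type assigns smoothly to each $q$ a spin-tensor of that type at $\pi(q)$;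 components are functions of $x$, the components of the $\mathbf S[P]$ and their conjugates. $\partial/\partial S[P]^I_J$ and $\partial/\partial\tau(S[P])^{I'}_{J'}$ are Wirtinger derivatives (sums over $I,J$ resp. $I',J'$ run over all multi-indices of the types of $\mathbf S[P]$ resp. $\tau(\mathbf S[P])$). $\mathbf S[Q]$ and $\tau(\mathbf S[Q])$ are themselves extended fields. Native multivariate differentiations. For $\mathbf Y$ of type $(\alpha_P,\beta_P|\nu_P,\gamma_P|m_P,n_P)$: $\vec\nabla_{\mathbf Y}[P]\mathbf Z=\sum_{I,J}Y^I_J\,\partial\mathbf Z/\partial S[P]^I_J$; for $\mathbf Y$ of type $(\nu_P,\gamma_P|\alpha_P,\beta_P|m_P,n_P)$: $\bar{\vec\nabla}_{\mathbf Y}[P]\mathbf Z=\sum_{I',J'}Y^{I'}_{J'}\,\partial\mathbf Z/\partial\tau(S[P])^{I'}_{J'}$ (componentwise in $\mathbf Z$). Algebraic action and degenerate differentiation. For $2\times2$ matrix functions $a,b$, $4\times4$ matrix function $g$, and $X$ of type $(\varepsilon,\eta|\sigma,\zeta|e,f)$, $L(a,b,g)X$ has components $\sum_{\mu\le\varepsilon}\sum_v a^{a_\mu}_vX^{\dots v\dots}-\sum_{\mu\le\eta}\sum_w a^w_{b_\mu}X_{\dots w\dots}+\sum_{\mu\le\sigma}\sum_v b^{\bar a_\mu}_vX^{\dots v\dots}-\sum_{\mu\le\zeta}\sum_w b^w_{\bar b_\mu}X_{\dots w\dots}+\sum_{\mu\le e}\sum_v g^{c_\mu}_vX^{\dots v\dots}-\sum_{\mu\le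 f}\sum_w g^w_{d_\mu}X_{\dots w\dots}$ (the $\mu$-th index of the respective group replaced by the summation index). For $\mathfrak S$ of type $(1,1|0,0|0,0)$, $\bar{\mathfrak S}$ of type $(0,0|1,1|0,0)$, $\mathbf S$ of type $(0,0|0,0|1,1)$: $D(\mathfrak S,\bar{\mathfrak S},\mathbf S)X:=L(\mathfrak S,\bar{\mathfrak S},\mathbf S)X$. Extended spinor connection and covariant differentiation. An extended spinor connection is given in each equipped chart by smooth functions (of $x$ and the $\mathbf S[P]$ components and conjugates) $\mathrm A^k_{j\,i}$, $\bar{\mathrm A}^k_{j\,i}$ ($k,i\in\{1,2\}$, $j\in\{0,..,3\}$) and $\Gamma^k_{j\,i}$ ($k,i,j\in\{0,..,3\}$), transforming between charts so that $\nabla$ below is chart-independent. With $L_j:=L(\mathrm A_j,\bar{\mathrm A}_j,\Gamma_j)$, $\mathrm A_j=(\mathrm A^k_{j\,i})_{k,i}$ etc.: $$\nabla_j\mathbf Z=\sum_k\Upsilon^k_j\frac{\partial\mathbf Z}{\partial x^k}-\sum_{P}\sum_{I,J}(L_j\mathbf S[P])^I_J\frac{\partial\mathbf Z}{\partial S[P]^I_J}-\sum_{P}\sum_{I',J'}(L_j\tau(\mathbf S[P]))^{I'}_{J'}\frac{\partial\mathbf Z}{\partial\tau(S[P])^{I'}_{J'}}+L_j\mathbf Z,$$ and $\nabla_{\mathbf X}\mathbf Z=\sum_jX^j\nabla_j\mathbf Z$ for an extended vector field $\mathbf X$ (type $(0,0|0,0|1,0)$). $[A,B]=AB-BA$. 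*)

(* Everything is formulated in ONE equipped local chart of the composite
   bundle N (the statement is a chart-wise identity of components).       *)
From Stdlib Require Import Reals.
From Coquelicot Require Import Coquelicot.
From mathcomp Require Import all_boot.



Unset Printing Implicit Defensive.

Local Open Scope C_scope.

Record stype := STy { s_al : nat; s_be : nat; s_nu : nat; s_ga : nat;
                      s_m : nat; s_n : nat }.

Definition tau_ty (t : stype) : stype :=
  STy (s_nu t) (s_ga t) (s_al t) (s_be t) (s_m t) (s_n t).

Definition vec_ty : stype := STy 0 0 0 0 1 0.

(* A multi-index of type t: upper undotted spinor indices, lower undotted,
   upper dotted, lower dotted (all in {1,2} = 'I_2), upper tensor, lower
   tensor indices (in {0..3} = 'I_4). *)
Notation midx t :=
  ({ffun 'I_(s_al t) -> 'I_2} * {ffun 'I_(s_be t) -> 'I_2} *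
   {ffun 'I_(s_nu t) -> 'I_2} * {ffun 'I_(s_ga t) -> 'I_2} *
   {ffun 'I_(s_m t) -> 'I_4} * {ffun 'I_(s_n t) -> 'I_4})%type.

Definition mk {t : stype} a b c d e f : midx t := (a, b, c, d, e, f).
Definition ia {t : stype} (I : midx t) := I.1.1.1.1.1.
Definition ib {t : stype} (I : midx t) := I.1.1.1.1.2.
Definition ic {t : stype} (I : midx t) := I.1.1.1.2.
Definition id' {t : stype} (I : midx t) := I.1.1.2.
Definition ie {t : stype} (I : midx t) := I.1.2.
Definition if' {t : stype} (I : midx t) := I.2.

(* the index of tau(S) corresponding to an index of S:
   tau(S)^{i..,ibar..}_{j..,jbar..} = conj (S^{ibar..,i..}_{jbar..,j..}) *)
Definition swap_idx {t : stype} (I : midx (tau_ty t)) : midx t :=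
  mk (ic I) (id' I) (ia I) (ib I) (ie I) (if' I).

Definition upd {n : nat} {T : finType} (f : {ffun 'I_n -> T}) (mu : 'I_n) (v : T)
  : {ffun 'I_n -> T} := [ffun k => if k == mu then v else f k].

Definition csum {T : finType} (F : T -> C) : C := \big[Cplus/RtoC 0]_(i : T) F i.
Definition csumo {n : nat} (F : 'I_n -> C) : C := \big[Cplus/RtoC 0]_(i < n) F i.
Definition rsumo {n : nat} (F : 'I_n -> R) : R := \big[Rplus/R0]_(i < n) F i.

(* (pointwise).  a k i = a^k_i, b k i = b^k_i, g k i = g^k_i.           *)
Definition Lop {t : stype} (a b : 'I_2 -> 'I_2 -> C) (g : 'I_4 -> 'I_4 -> C)
  (X : midx t -> C) (I : midx t) : C :=
    csumo (fun mu => csumo (fun v : 'I_2 =>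
      a (ia I mu) v * X (mk (upd (ia I) mu v) (ib I) (ic I) (id' I) (ie I) (if' I))))
  - csumo (fun mu => csumo (fun w : 'I_2 =>
      a w (ib I mu) * X (mk (ia I) (upd (ib I) mu w) (ic I) (id' I) (ie I) (if' I))))
  + csumo (fun mu => csumo (fun v : 'I_2 =>
      b (ic I mu) v * X (mk (ia I) (ib I) (upd (ic I) mu v) (id' I) (ie I) (if' I))))
  - csumo (fun mu => csumo (fun w : 'I_2 =>
      b w (id' I mu) * X (mk (ia I) (ib I) (ic I) (upd (id' I) mu w) (ie I) (if' I))))
  + csumo (fun mu => csumo (fun v : 'I_4 =>
      g (ie I mu) v * X (mk (ia I) (ib I) (ic I) (id' I) (upd (ie I) mu v) (if' I))))
  - csumo (fun mu => csumo (fun w : 'I_4 =>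
      g w (if' I mu) * X (mk (ia I) (ib I) (ic I) (id' I) (ie I) (upd (if' I) mu w)))).

Definition dRC (f : R -> C) : C :=
  (Derive (fun s => fst (f s)) 0, Derive (fun s => snd (f s)) 0).
Definition exRC (f : R -> C) : Prop :=
  ex_derive (fun s => fst (f s)) 0 /\ ex_derive (fun s => snd (f s)) 0.

Definition xshift (x : 'I_4 -> R) (k : 'I_4) (s : R) : 'I_4 -> R :=
  fun l => if l == k then Rplus (x l) s else x l.

Section Chart.

(* the composite bundle: J summands of types tp P, P = 1..J *)
Variable J : nat.
Variable tp : 'I_J -> stype.

(* fibre coordinates: all components S[P]^I_J of all S[P] *)
Definition coordT := {P : 'I_J & midx (tp P)}.
Definition mkc (P : 'I_J) (I : midx (tp P)) : coordT :=
  @existT _ (fun P0 => midx (tp P0)) P I.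
Arguments mkc : clear implicits.

Definition pt := (('I_4 -> R) * (coordT -> C))%type.

Definition sshift (s : coordT -> C) (c : coordT) (w : C) : coordT -> C :=
  fun d => if d == c then s d + w else s d.

Inductive dir := Dx of 'I_4 | Dre of coordT | Dim of coordT.

Definition shift (q : pt) (d : dir) (s : R) : pt :=
  match d with
  | Dx k => (xshift q.1 k s, q.2)
  | Dre c => (q.1, sshift q.2 c (RtoC s))
  | Dim c => (q.1, sshift q.2 c (R0, s))
  end.

Definition pd (d : dir) (F : pt -> C) : pt -> C :=
  fun q => dRC (fun s => F (shift q d s)).

Definition pds (ds : seq dir) (F : pt -> C) : pt -> C := foldr pd F ds.

Definition smooth_on (Dm : pt -> Prop) (F : pt -> C) : Prop :=
  forall (ds : seq dir) (q : pt), Dm q ->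
    continuous (pds ds F) q /\ forall d, exRC (fun s => pds ds F (shift q d s)).

(* Wirtinger derivatives d/dz, d/dzbar w.r.t. the fibre coordinate c *)
Definition dz (c : coordT) (F : pt -> C) : pt -> C :=
  fun q => / 2 * (pd (Dre c) F q - Ci * pd (Dim c) F q).
Definition dzb (c : coordT) (F : pt -> C) : pt -> C :=
  fun q => / 2 * (pd (Dre c) F q + Ci * pd (Dim c) F q).

(* extended spin-tensorial fields of type t (components) *)
Definition field (t : stype) := midx t -> pt -> C.

Definition Sf (P : 'I_J) : field (tp P) := fun I q => q.2 (mkc P I).
Definition tauSf (P : 'I_J) : field (tau_ty (tp P)) :=
  fun I q => Cconj (q.2 (mkc P (swap_idx I))).

Definition Lf {t : stype} (a b : 'I_2 -> 'I_2 -> pt -> C) (g : 'I_4 -> 'I_4 -> pt -> C)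
  (Z : field t) : field t :=
  fun I q => Lop (fun k i => a k i q) (fun k i => b k i q) (fun k i => g k i q)
                 (fun I' => Z I' q) I.

Definition vidx (j : 'I_4) : midx vec_ty :=
  mk [ffun _ => ord0] [ffun _ => ord0] [ffun _ => ord0] [ffun _ => ord0]
     [ffun _ => j] [ffun _ => ord0].
Definition vcomp (X : field vec_ty) (j : 'I_4) : pt -> C := X (vidx j).
Definition vupper (I : midx vec_ty) : 'I_4 := ie I ord0.

(* tangent frame: Ups k i x = Upsilon^k_i ;  c k i j x = c^k_{ij} *)
Variable Ups : 'I_4 -> 'I_4 -> ('I_4 -> R) -> R.
Variable cc : 'I_4 -> 'I_4 -> 'I_4 -> ('I_4 -> R) -> R.
(* connection:  A j k i = A^k_{j i},  Ab j k i = Abar^k_{j i},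
   Gam j k i = Gamma^k_{j i} *)
Variable A Ab : 'I_4 -> 'I_2 -> 'I_2 -> pt -> C.
Variable Gam : 'I_4 -> 'I_4 -> 'I_4 -> pt -> C.

Definition Lj (j : 'I_4) {t : stype} (Z : field t) : field t :=
  Lf (A j) (Ab j) (Gam j) Z.

Definition Dop (i : 'I_4) (F : pt -> C) : pt -> C := fun q =>
    csumo (fun k => RtoC (Ups k i q.1) * pd (Dx k) F q)
  - csumo (fun P : 'I_J => csum (fun I : midx (tp P) =>
       Lj i (Sf P) I q * dz (mkc P I) F q))
  - csumo (fun P : 'I_J => csum (fun I' : midx (tau_ty (tp P)) =>
       Lj i (tauSf P) I' q * dzb (mkc P (swap_idx I')) F q)).

Definition nab (j : 'I_4) {t : stype} (Z : field t) : field t :=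
  fun I q => Dop j (Z I) q + Lj j Z I q.
Definition nabV (X : field vec_ty) {t : stype} (Z : field t) : field t :=
  fun I q => csumo (fun j => vcomp X j q * nab j Z I q).

Definition Tor (X Y : field vec_ty) : field vec_ty := fun I q =>
  let k := vupper I in
  csumo (fun i => csumo (fun j =>
    (Gam i k j q - Gam j k i q - RtoC (cc k i j q.1)) * vcomp X i q * vcomp Y j q)).

Definition Rc {n : nat} (B : 'I_4 -> 'I_n -> 'I_n -> pt -> C)
  (p r : 'I_n) (i j : 'I_4) : pt -> C := fun q =>
    Dop i (B j p r) q - Dop j (B i p r) q
  + csumo (fun h => B i p h q * B j h r q - B j p h q * B i h r q)
  - csumo (fun k => RtoC (cc k i j q.1) * B k p r q).

Definition Nc {n : nat} (B : 'I_4 -> 'I_n -> 'I_n -> pt -> C)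
  (X Y : field vec_ty) (p r : 'I_n) : pt -> C := fun q =>
  csumo (fun i => csumo (fun j => Rc B p r i j q * vcomp X i q * vcomp Y j q)).

Definition DN (X Y : field vec_ty) {t : stype} (Z : field t) : field t :=
  Lf (Nc A X Y) (Nc Ab X Y) (Nc Gam X Y) Z.

Definition UQ (X Y : field vec_ty) (Q : 'I_J) : field (tp Q) :=
  fun I q => - DN X Y (Sf Q) I q.
Definition UbQ (X Y : field vec_ty) (Q : 'I_J) : field (tau_ty (tp Q)) :=
  fun I q => - DN X Y (tauSf Q) I q.

Definition vnab (Q : 'I_J) (W : field (tp Q)) {t : stype} (Z : field t) : field t :=
  fun I q => csum (fun I' : midx (tp Q) => W I' q * dz (mkc Q I') (Z I) q).
Definition vnabb (Q : 'I_J) (W : field (tau_ty (tp Q))) {t : stype} (Z : field t)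
  : field t :=
  fun I q => csum (fun I' : midx (tau_ty (tp Q)) =>
                 W I' q * dzb (mkc Q (swap_idx I')) (Z I) q).

Definition Uf (X Y : field vec_ty) : field vec_ty :=
  fun I q => nabV X Y I q - nabV Y X I q - Tor X Y I q.

End Chart.

Definition frame_on (Ux : ('I_4 -> R) -> Prop)
  (Ups : 'I_4 -> 'I_4 -> ('I_4 -> R) -> R) : Prop :=
  forall x, Ux x -> forall a : 'I_4 -> R,
    (forall k, rsumo (fun i => Rmult (a i) (Ups k i x)) = R0) -> forall i, a i = R0.

(* [Upsilon_i, Upsilon_j] = sum_m c^m_{ij} Upsilon_m, in components *)
Definition bracket_rel (Ux : ('I_4 -> R) -> Prop)
  (Ups : 'I_4 -> 'I_4 -> ('I_4 -> R) -> R)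
  (cc : 'I_4 -> 'I_4 -> 'I_4 -> ('I_4 -> R) -> R) : Prop :=
  forall x, Ux x -> forall i j k : 'I_4,
    rsumo (fun l =>
      Rminus (Rmult (Ups l i x) (Derive (fun s => Ups k j (xshift x l s)) R0))
             (Rmult (Ups l j x) (Derive (fun s => Ups k i (xshift x l s)) R0)))
    = rsumo (fun m => Rmult (cc m i j x) (Ups k m x)).

From HB Require Import structures.
From Pilot Require Import Defs.
From Stdlib Require Import Reals FunctionalExtensionality.
From Coquelicot Require Import Coquelicot.
From mathcomp Require Import all_boot.
Local Open Scope C_scope.

(* In a chart of N, nabla_i = D_i + L_i, where L_i = L(A_i, Abar_i, Gamma_i) is algebraic and
   D_i is a vector field on N: a combination of the coordinate derivations d/dx^k, d/dS and
   d/dtau(S) with coefficients Upsilon^k_i, -L_i S and -L_i tau(S).  The commutator of two vector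
   fields is the vector field whose coefficients are the mutual derivatives of the coefficients.
   On the x-part these are the structure functions c^m_ij of the frame; on the fibre part, since
   D_i S = -L_i S, the Leibniz rule for L together with
   [L(a,b,g), L(a',b',g')] = L([a,a'],[b,b'],[g,g']) gives c^m_ij (-L_m S) - L(R_ij) S.  Hence
     [nabla_i, nabla_j] = c^m_ij nabla_m - L(R_ij) S d/dS - L(R_ij) tau(S) d/dtau(S) + L(R_ij).
   Contracting with X^i Y^j, the derivatives of X and Y produce nabla_X Y - nabla_Y X, whose
   Gamma-terms the torsion cancels, and the identity follows. *)

HB.instance Definition _ :=
  Monoid.isComLaw.Build C (RtoC 0) Cplus Cplus_assoc Cplus_comm Cplus_0_l.

Section ComplexSums.
Implicit Types (T U : finType).

Lemma csum_ext T (F G : T -> C) : (forall i, F i = G i) -> csum F = csum G.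
Proof. by move=> FG; apply: eq_bigr => i _. Qed.

Lemma csum0 T : csum (fun _ : T => RtoC 0) = RtoC 0.
Proof. exact: big1. Qed.

Lemma csumD T (F G : T -> C) : csum (fun i => F i + G i) = csum F + csum G.
Proof. exact: big_split. Qed.

Lemma csumMl T (c : C) (F : T -> C) : c * csum F = csum (fun i => c * F i).
Proof.
rewrite /csum; apply: (big_rec2 (fun x y => c * y = x)); first by ring.
by move=> i x y _ <-; ring.
Qed.

Lemma csumMr T (c : C) (F : T -> C) : csum F * c = csum (fun i => F i * c).
Proof. rewrite Cmult_comm csumMl; apply: csum_ext => i; ring. Qed.

Lemma csumN T (F : T -> C) : - csum F = csum (fun i => - F i).
Proof.
rewrite /csum; apply: (big_rec2 (fun x y => - y = x)); first by ring.
by move=> i x y _ <-; ring.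
Qed.

Lemma csumB T (F G : T -> C) : csum (fun i => F i - G i) = csum F - csum G.
Proof. by rewrite /Cminus csumD csumN. Qed.

Lemma exchange_csum T U (F : T -> U -> C) :
  csum (fun i => csum (fun j => F i j)) = csum (fun j => csum (fun i => F i j)).
Proof. exact: exchange_big. Qed.

Lemma exchange_csum2 T1 T2 T3 T4 (F : T1 -> T2 -> T3 -> T4 -> C) :
  csum (fun a => csum (fun b => csum (fun c => csum (fun d => F a b c d))))
  = csum (fun c => csum (fun d => csum (fun a => csum (fun b => F a b c d)))).
Proof.
under csum_ext => a do rewrite exchange_csum.
rewrite exchange_csum; apply: csum_ext => c.
under csum_ext => a do rewrite exchange_csum.
exact: exchange_csum.
Qed.

Lemma csum_delta T (i0 : T) (F : T -> C) :
  csum (fun i => if i0 == i then F i else RtoC 0) = F i0.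
Proof.
rewrite /csum (bigD1 i0) //= eqxx big1 ?Cplus_0_r // => i.
by rewrite eq_sym => /negbTE ->.
Qed.

Lemma csum_weighted_exchange {I1 I2 P : finType} {T : P -> finType}
    (c : I1 -> I2 -> C) (L : I1 -> I2 -> forall Q, T Q -> C) (d : forall Q, T Q -> C) :
  csum (fun Q => csum (fun x => csum (fun i => csum (fun j => c i j * L i j Q x)) * d Q x))
  = csum (fun i => csum (fun j => c i j * csum (fun Q => csum (fun x => L i j Q x * d Q x)))).
Proof.
under csum_ext => Q do under csum_ext => x do
  (rewrite csumMr; under csum_ext => i do rewrite csumMr).
under csum_ext => Q do (rewrite exchange_csum; under csum_ext => i do rewrite exchange_csum).
rewrite exchange_csum; apply: csum_ext => i; rewrite exchange_csum; apply: csum_ext => j.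
rewrite csumMl; apply: csum_ext => Q; rewrite csumMl; apply: csum_ext => x; ring.
Qed.

Lemma csum_mul_delta T (i0 : T) (F : T -> C) :
  csum (fun i => F i * (if i == i0 then RtoC 1 else RtoC 0)) = F i0.
Proof.
rewrite -[RHS](csum_delta _ i0); apply: csum_ext => i.
by rewrite eq_sym; case: eqP => [<-|_]; ring.
Qed.

Lemma csum_sig {I : finType} {T : I -> finType} (F : {i : I & T i} -> C) :
  csum F = csum (fun i => csum (fun j => F (existT T i j))).
Proof.
rewrite /csum (sig_big_dep xpredT (fun _ => xpredT) (fun i j => F (existT T i j))).
by apply: eq_bigr => -[i j] _.
Qed.

Lemma csum_sum T U (F : (T + U)%type -> C) :
  csum F = csum (fun i => F (inl i)) + csum (fun j => F (inr j)).
Proof. by rewrite /csum big_sumType. Qed.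

End ComplexSums.

Lemma csumoE n (F : 'I_n -> C) : csumo F = csum F.
Proof. by []. Qed.

Lemma RtoC_rsumo n (F : 'I_n -> R) : RtoC (rsumo F) = csumo (fun i => RtoC (F i)).
Proof.
rewrite /rsumo /csumo; apply: (big_morph RtoC) => // x y.
by rewrite RtoC_plus.
Qed.

Section Update.
Context {n : nat} {T : finType}.
Implicit Types (f : {ffun 'I_n -> T}).

Lemma updE f mu v nu : upd f mu v nu = if nu == mu then v else f nu.
Proof. by rewrite ffunE. Qed.

Lemma upd_upd f mu v w : upd (upd f mu v) mu w = upd f mu w.
Proof. by apply/ffunP => k; rewrite !updE; case: (k == mu). Qed.

Lemma updC f mu v nu w : nu != mu -> upd (upd f mu v) nu w = upd (upd f nu w) mu v.
Proof.
move=> nu_mu; apply/ffunP => k; rewrite !updE.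
by case: (eqVneq k nu) => [->|//]; rewrite (negbTE nu_mu).
Qed.

End Update.

Definition opp_tr {T : Type} (M : T -> T -> C) : T -> T -> C := fun x y => - M y x.

Definition mxbracket {T : finType} (M N : T -> T -> C) : T -> T -> C :=
  fun x y => csum (fun h => M x h * N h y - N x h * M h y).

Lemma mxbracket_opp_tr {T : finType} (M N : T -> T -> C) :
  mxbracket (opp_tr M) (opp_tr N) = opp_tr (mxbracket M N).
Proof.
do 2 apply: functional_extensionality => ?.
rewrite /mxbracket /opp_tr csumN; apply: csum_ext => h; ring.
Qed.

Section IndexAction.
Variable t : stype.
Implicit Types (X : midx t -> C) (I : midx t).

(* [get] reads one group of indices of a multi-index and [set] overwrites it. *)
Definition iact {n} {T : finType} (get : midx t -> {ffun 'I_n -> T})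
    (set : midx t -> {ffun 'I_n -> T} -> midx t) (M : T -> T -> C) X I : C :=
  csum (fun mu => csum (fun v => M (get I mu) v * X (set I (upd (get I) mu v)))).

Variables (n : nat) (T : finType).
Variables (get : midx t -> {ffun 'I_n -> T}) (set : midx t -> {ffun 'I_n -> T} -> midx t).
Local Notation act := (iact get set).

Lemma eq_iact M1 M2 X1 X2 I :
  (forall x y, M1 x y = M2 x y) -> (forall J, X1 J = X2 J) -> act M1 X1 I = act M2 X2 I.
Proof. by move=> EM EX; apply: csum_ext => mu; apply: csum_ext => v; rewrite EM EX. Qed.

Lemma iact_addX M X1 X2 I :
  act M (fun J => X1 J + X2 J) I = act M X1 I + act M X2 I.
Proof. rewrite -csumD; apply: csum_ext => mu; rewrite -csumD; apply: csum_ext => v; ring. Qed.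

Lemma iact_scaleX M (c : C) X I : act M (fun J => c * X J) I = c * act M X I.
Proof. rewrite csumMl; apply: csum_ext => mu; rewrite csumMl; apply: csum_ext => v; ring. Qed.

Lemma iact_sumX {U : finType} M (V : U -> midx t -> C) I :
  act M (fun J => csum (fun k => V k J)) I = csum (fun k => act M (V k) I).
Proof.
rewrite exchange_csum; apply: csum_ext => mu; rewrite exchange_csum.
by apply: csum_ext => v; rewrite csumMl.
Qed.

Lemma iact_addM M1 M2 X I :
  act (fun x y => M1 x y + M2 x y) X I = act M1 X I + act M2 X I.
Proof. rewrite -csumD; apply: csum_ext => mu; rewrite -csumD; apply: csum_ext => v; ring. Qed.

Lemma iact_subM M1 M2 X I :
  act (fun x y => M1 x y - M2 x y) X I = act M1 X I - act M2 X I.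
Proof. rewrite -csumB; apply: csum_ext => mu; rewrite -csumB; apply: csum_ext => v; ring. Qed.

Lemma iact_sumM {U : finType} (c : U -> C) (M : U -> T -> T -> C) X I :
  act (fun x y => csum (fun k => c k * M k x y)) X I = csum (fun k => c k * act (M k) X I).
Proof.
under [RHS]csum_ext => k do rewrite csumMl.
rewrite exchange_csum; apply: csum_ext => mu.
under [RHS]csum_ext => k do rewrite csumMl.
rewrite exchange_csum; apply: csum_ext => v; rewrite csumMr; apply: csum_ext => k; ring.
Qed.

Lemma iact_opp_tr M X I :
  act (opp_tr M) X I
  = - csum (fun mu => csum (fun w => M w (get I mu) * X (set I (upd (get I) mu w)))).
Proof.
rewrite csumN; apply: csum_ext => mu; rewrite csumN; apply: csum_ext => w; rewrite /opp_tr; ring.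
Qed.

Hypothesis get_set : forall I f, get (set I f) = f.
Hypothesis set_set : forall I f f', set (set I f) f' = set I f'.

Let twice (M1 M2 : T -> T -> C) X I := csum (fun mu => csum (fun v => csum (fun w =>
  M1 (get I mu) v * M2 v w * X (set I (upd (get I) mu w))))).
Let apart (M1 M2 : T -> T -> C) X I := csum (fun mu => csum (fun v => csum (fun nu => csum (fun w =>
  if nu == mu then RtoC 0 else
  M1 (get I mu) v * M2 (get I nu) w * X (set I (upd (upd (get I) mu v) nu w)))))).

Lemma iact_iact M1 M2 X I : act M1 (act M2 X) I = twice M1 M2 X I + apart M1 M2 X I.
Proof.
rewrite /twice /apart /iact -csumD; apply: csum_ext => mu; rewrite -csumD; apply: csum_ext => v.
rewrite get_set csumMl.
transitivity (csum (fun nu =>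
  (if mu == nu then csum (fun w => M1 (get I mu) v * M2 v w * X (set I (upd (get I) mu w)))
   else RtoC 0)
  + csum (fun w => if nu == mu then RtoC 0 else
      M1 (get I mu) v * M2 (get I nu) w * X (set I (upd (upd (get I) mu v) nu w)))));
  last by rewrite csumD csum_delta.
apply: csum_ext => nu; case: (eqVneq mu nu) => [<-|ne].
  rewrite csum0 Cplus_0_r csumMl; apply: csum_ext => w.
  rewrite set_set updE eqxx upd_upd; ring.
rewrite Cplus_0_l csumMl; apply: csum_ext => w.
rewrite set_set updE eq_sym (negbTE ne); ring.
Qed.

Lemma apartC M1 M2 X I : apart M1 M2 X I = apart M2 M1 X I.
Proof.
rewrite [RHS]/apart exchange_csum2; do 4 apply: csum_ext => ?.
by rewrite eq_sym; case: eqP => [//|/eqP ne]; rewrite (updC _ _ _ _ _ ne); ring.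
Qed.

(* In the commutator the terms changing two different entries of the group cancel; only
   those changing one entry twice remain. *)
Lemma iact_commutator M1 M2 X I :
  act M1 (act M2 X) I - act M2 (act M1 X) I = act (mxbracket M1 M2) X I.
Proof.
rewrite !iact_iact apartC.
have -> : forall a b c : C, a + c - (b + c) = a - b by move=> *; ring.
rewrite /twice -csumB; apply: csum_ext => mu; rewrite -csumB.
under csum_ext => v do rewrite -csumB.
rewrite exchange_csum; apply: csum_ext => w.
rewrite csumMr; apply: csum_ext => v; ring.
Qed.

End IndexAction.
Arguments iact {t n T}.

(* The hypotheses say that [g1, s1] and [g2, s2] address disjoint groups of indices. *)
Lemma iact_indep t {n1 n2} {T1 T2 : finType}
  (g1 : midx t -> {ffun 'I_n1 -> T1}) (s1 : midx t -> {ffun 'I_n1 -> T1} -> midx t)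
  (g2 : midx t -> {ffun 'I_n2 -> T2}) (s2 : midx t -> {ffun 'I_n2 -> T2} -> midx t) :
  (forall I f, g1 (s2 I f) = g1 I) -> (forall I f, g2 (s1 I f) = g2 I) ->
  (forall I f1 f2, s1 (s2 I f2) f1 = s2 (s1 I f1) f2) ->
  forall (M1 : T1 -> T1 -> C) (M2 : T2 -> T2 -> C) (X : midx t -> C) (I : midx t),
  iact g1 s1 M1 (iact g2 s2 M2 X) I = iact g2 s2 M2 (iact g1 s1 M1 X) I.
Proof.
move=> g1s2 g2s1 s12 M1 M2 X I.
transitivity (csum (fun mu => csum (fun v => csum (fun nu => csum (fun w =>
  M1 (g1 I mu) v * M2 (g2 I nu) w * X (s2 (s1 I (upd (g1 I) mu v)) (upd (g2 I) nu w))))))).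
  apply: csum_ext => mu; apply: csum_ext => v; rewrite csumMl.
  apply: csum_ext => nu; rewrite csumMl; apply: csum_ext => w; rewrite !g2s1; ring.
rewrite exchange_csum2; apply: csum_ext => nu; apply: csum_ext => w; rewrite csumMl.
apply: csum_ext => mu; rewrite csumMl; apply: csum_ext => v; rewrite !g1s2 s12; ring.
Qed.

Section OppTranspose.
Variable T : Type.
Implicit Types (M : T -> T -> C).

Lemma opp_trD M1 M2 :
  opp_tr (fun x y => M1 x y + M2 x y) = (fun x y => opp_tr M1 x y + opp_tr M2 x y).
Proof. do 2 apply: functional_extensionality => ?; rewrite /opp_tr; ring. Qed.

Lemma opp_trB M1 M2 :
  opp_tr (fun x y => M1 x y - M2 x y) = (fun x y => opp_tr M1 x y - opp_tr M2 x y).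
Proof. do 2 apply: functional_extensionality => ?; rewrite /opp_tr; ring. Qed.

Lemma opp_tr_sum {U : finType} (c : U -> C) (M : U -> T -> T -> C) :
  opp_tr (fun x y => csum (fun k => c k * M k x y))
  = (fun x y => csum (fun k => c k * opp_tr (M k) x y)).
Proof.
do 2 apply: functional_extensionality => ?.
rewrite /opp_tr csumN; apply: csum_ext => k; ring.
Qed.

End OppTranspose.

Section AlgebraicAction.
Variable t : stype.
Implicit Types (X : midx t -> C) (I : midx t) (a b : 'I_2 -> 'I_2 -> C) (g : 'I_4 -> 'I_4 -> C).

Definition set_ia I f : midx t := mk f (ib I) (ic I) (id' I) (ie I) (if' I).
Definition set_ib I f : midx t := mk (ia I) f (ic I) (id' I) (ie I) (if' I).
Definition set_ic I f : midx t := mk (ia I) (ib I) f (id' I) (ie I) (if' I).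
Definition set_id I f : midx t := mk (ia I) (ib I) (ic I) f (ie I) (if' I).
Definition set_ie I f : midx t := mk (ia I) (ib I) (ic I) (id' I) f (if' I).
Definition set_if I f : midx t := mk (ia I) (ib I) (ic I) (id' I) (ie I) f.

(* [L(a,b,g)] acts on each of the six groups of indices separately; the groups of lower
   indices are acted on by the negative transposes. *)
Definition Lslot (s : 'I_6) a b g X I : C :=
  match val s with
  | 0 => iact ia set_ia a X I
  | 1 => iact ib set_ib (opp_tr a) X I
  | 2 => iact ic set_ic b X I
  | 3 => iact id' set_id (opp_tr b) X I
  | 4 => iact ie set_ie g X I
  | _ => iact if' set_if (opp_tr g) X I
  end.

Lemma Lop_slots a b g X I : Lop a b g X I = csum (fun s : 'I_6 => Lslot s a b g X I).
Proof.
rewrite /csum !big_ord_recl big_ord0 /Lslot /= !iact_opp_tr /Lop /Cminus.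
by rewrite Cplus_0_r !Cplus_assoc.
Qed.

Lemma Lslot_indep (s s' : 'I_6) a b g a' b' g' X I : s != s' ->
  Lslot s a b g (Lslot s' a' b' g' X) I = Lslot s' a' b' g' (Lslot s a b g X) I.
Proof.
case: s => [[|[|[|[|[|[|//]]]]]] ?]; case: s' => [[|[|[|[|[|[|//]]]]]] ?] //= _;
  by apply: iact_indep => -[[[[[? ?] ?] ?] ?] ?].
Qed.

Lemma Lslot_commutator (s : 'I_6) a b g a' b' g' X I :
  Lslot s a b g (Lslot s a' b' g' X) I - Lslot s a' b' g' (Lslot s a b g X) I
  = Lslot s (mxbracket a a') (mxbracket b b') (mxbracket g g') X I.
Proof.
by case: s => [[|[|[|[|[|[|//]]]]]] ?] /=;
  rewrite iact_commutator ?mxbracket_opp_tr // => -[[[[[? ?] ?] ?] ?] ?].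
Qed.

Lemma Lslot_sumX {U : finType} (s : 'I_6) a b g (V : U -> midx t -> C) I :
  Lslot s a b g (fun J => csum (fun k => V k J)) I = csum (fun k => Lslot s a b g (V k) I).
Proof. by case: s => [[|[|[|[|[|[|//]]]]]] ?]; apply: iact_sumX. Qed.

Lemma Lslot_addX (s : 'I_6) a b g X1 X2 I :
  Lslot s a b g (fun J => X1 J + X2 J) I = Lslot s a b g X1 I + Lslot s a b g X2 I.
Proof. by case: s => [[|[|[|[|[|[|//]]]]]] ?]; apply: iact_addX. Qed.

Lemma Lslot_scaleX (s : 'I_6) a b g (c : C) X I :
  Lslot s a b g (fun J => c * X J) I = c * Lslot s a b g X I.
Proof. by case: s => [[|[|[|[|[|[|//]]]]]] ?]; apply: iact_scaleX. Qed.

Lemma Lslot_addM (s : 'I_6) a1 b1 g1 a2 b2 g2 X I :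
  Lslot s (fun x y => a1 x y + a2 x y) (fun x y => b1 x y + b2 x y)
    (fun x y => g1 x y + g2 x y) X I
  = Lslot s a1 b1 g1 X I + Lslot s a2 b2 g2 X I.
Proof. by case: s => [[|[|[|[|[|[|//]]]]]] ?]; rewrite /Lslot /= ?opp_trD iact_addM. Qed.

Lemma Lslot_subM (s : 'I_6) a1 b1 g1 a2 b2 g2 X I :
  Lslot s (fun x y => a1 x y - a2 x y) (fun x y => b1 x y - b2 x y)
    (fun x y => g1 x y - g2 x y) X I
  = Lslot s a1 b1 g1 X I - Lslot s a2 b2 g2 X I.
Proof. by case: s => [[|[|[|[|[|[|//]]]]]] ?]; rewrite /Lslot /= ?opp_trB iact_subM. Qed.

Lemma Lslot_sumM {U : finType} (s : 'I_6) (c : U -> C) (a b : U -> 'I_2 -> 'I_2 -> C)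
    (g : U -> 'I_4 -> 'I_4 -> C) X I :
  Lslot s (fun x y => csum (fun k => c k * a k x y)) (fun x y => csum (fun k => c k * b k x y))
    (fun x y => csum (fun k => c k * g k x y)) X I
  = csum (fun k => c k * Lslot s (a k) (b k) (g k) X I).
Proof. by case: s => [[|[|[|[|[|[|//]]]]]] ?]; rewrite /Lslot /= ?opp_tr_sum iact_sumM. Qed.

Lemma eq_Lop a1 b1 g1 a2 b2 g2 X1 X2 I :
  (forall x y, a1 x y = a2 x y) -> (forall x y, b1 x y = b2 x y) ->
  (forall x y, g1 x y = g2 x y) -> (forall J, X1 J = X2 J) ->
  Lop a1 b1 g1 X1 I = Lop a2 b2 g2 X2 I.
Proof.
move=> Ea Eb Eg EX; congr Lop; do ?[apply: functional_extensionality => ?];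
  by rewrite ?Ea ?Eb ?Eg ?EX.
Qed.

Lemma Lop_addX a b g X1 X2 I :
  Lop a b g (fun J => X1 J + X2 J) I = Lop a b g X1 I + Lop a b g X2 I.
Proof. by rewrite !Lop_slots -csumD; apply: csum_ext => s; rewrite Lslot_addX. Qed.

Lemma Lop_sumX {U : finType} a b g (c : U -> C) (V : U -> midx t -> C) I :
  Lop a b g (fun J => csum (fun k => c k * V k J)) I = csum (fun k => c k * Lop a b g (V k) I).
Proof.
rewrite Lop_slots; under [RHS]csum_ext => k do rewrite Lop_slots csumMl.
rewrite exchange_csum; apply: csum_ext => s.
by rewrite Lslot_sumX; apply: csum_ext => k; rewrite Lslot_scaleX.
Qed.

Lemma Lop_oppX a b g X I : Lop a b g (fun J => - X J) I = - Lop a b g X I.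
Proof.
rewrite (@eq_Lop _ _ _ a b g _ (fun J => RtoC (-1) * X J)) // => [|J]; last by ring.
rewrite !Lop_slots csumN; apply: csum_ext => s; rewrite Lslot_scaleX; ring.
Qed.

Lemma Lop_addM a1 b1 g1 a2 b2 g2 X I :
  Lop (fun x y => a1 x y + a2 x y) (fun x y => b1 x y + b2 x y) (fun x y => g1 x y + g2 x y) X I
  = Lop a1 b1 g1 X I + Lop a2 b2 g2 X I.
Proof. by rewrite !Lop_slots -csumD; apply: csum_ext => s; rewrite Lslot_addM. Qed.

Lemma Lop_subM a1 b1 g1 a2 b2 g2 X I :
  Lop (fun x y => a1 x y - a2 x y) (fun x y => b1 x y - b2 x y) (fun x y => g1 x y - g2 x y) X I
  = Lop a1 b1 g1 X I - Lop a2 b2 g2 X I.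
Proof. by rewrite !Lop_slots -csumB; apply: csum_ext => s; rewrite Lslot_subM. Qed.

Lemma Lop_sumM {U : finType} (c : U -> C) (a b : U -> 'I_2 -> 'I_2 -> C)
    (g : U -> 'I_4 -> 'I_4 -> C) X I :
  Lop (fun x y => csum (fun k => c k * a k x y)) (fun x y => csum (fun k => c k * b k x y))
    (fun x y => csum (fun k => c k * g k x y)) X I
  = csum (fun k => c k * Lop (a k) (b k) (g k) X I).
Proof.
rewrite Lop_slots; under [RHS]csum_ext => k do rewrite Lop_slots csumMl.
by rewrite exchange_csum; apply: csum_ext => s; rewrite Lslot_sumM.
Qed.

Lemma Lop_commutator a b g a' b' g' X I :
  Lop a b g (Lop a' b' g' X) I - Lop a' b' g' (Lop a b g X) I
  = Lop (mxbracket a a') (mxbracket b b') (mxbracket g g') X I.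
Proof.
have slots a0 b0 g0 : Lop a0 b0 g0 X = fun J => csum (fun s => Lslot s a0 b0 g0 X J).
  by apply: functional_extensionality => J; rewrite Lop_slots.
rewrite !Lop_slots !slots.
under csum_ext => s do rewrite Lslot_sumX.
under [in X in _ - X]csum_ext => s do rewrite Lslot_sumX.
rewrite [in X in _ - X]exchange_csum -csumB; apply: csum_ext => s.
rewrite -csumB -Lslot_commutator -(csum_delta _ s (fun s' =>
  Lslot s a b g (Lslot s' a' b' g' X) I - Lslot s' a' b' g' (Lslot s a b g X) I)).
apply: csum_ext => s'.
by case: eqP => [<- //|/eqP ne]; rewrite /= Lslot_indep //; apply: Cplus_opp_r.
Qed.

End AlgebraicAction.
Arguments Lslot {t}.

Section RealToComplexDerivative.
Implicit Types (f g : R -> C).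

Lemma exRC_const (c : C) : exRC (fun _ => c).
Proof. split; exact: ex_derive_const. Qed.

Lemma dRC_const (c : C) : dRC (fun _ => c) = RtoC 0.
Proof. by rewrite /dRC !Derive_const. Qed.

Lemma exRC_add f g : exRC f -> exRC g -> exRC (fun s => f s + g s).
Proof. by move=> [? ?] [? ?]; split; apply: ex_derive_plus. Qed.

Lemma dRC_add f g : exRC f -> exRC g -> dRC (fun s => f s + g s) = dRC f + dRC g.
Proof.
move=> [? ?] [? ?]; rewrite /dRC /=.
by rewrite (Derive_plus (fun s => fst (f s))) // (Derive_plus (fun s => snd (f s))).
Qed.

Lemma exRC_mul f g : exRC f -> exRC g -> exRC (fun s => f s * g s).
Proof.
move=> [? ?] [? ?]; split => /=.
- by apply: ex_derive_minus; apply: ex_derive_mult.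
- by apply: ex_derive_plus; apply: ex_derive_mult.
Qed.

Lemma dRC_mul f g : exRC f -> exRC g ->
  dRC (fun s => f s * g s) = dRC f * g 0 + f 0 * dRC g.
Proof.
move=> [? ?] [? ?]; rewrite /dRC /=.
rewrite (Derive_minus (fun s => Rmult (fst (f s)) (fst (g s)))); try exact: ex_derive_mult.
rewrite (Derive_plus (fun s => Rmult (fst (f s)) (snd (g s)))); try exact: ex_derive_mult.
rewrite !Derive_mult //; apply: injective_projections => /=; ring.
Qed.

Lemma exRC_conj f : exRC f -> exRC (fun s => Cconj (f s)).
Proof. by move=> [? ?]; split => //=; apply: ex_derive_opp. Qed.

Lemma dRC_conj f : dRC (fun s => Cconj (f s)) = Cconj (dRC f).
Proof. by rewrite /dRC /= Derive_opp. Qed.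

End RealToComplexDerivative.

Lemma shift0 {J tp} (q : pt J tp) d : shift J tp q d R0 = q.
Proof.
case: q => x z; case: d => [k|c|c] /=; congr pair;
  apply: functional_extensionality => l; rewrite /xshift /sshift;
  case: eqP => // ->; rewrite ?Rplus_0_r //; apply: injective_projections => /=; ring.
Qed.

Definition diffat {J tp} (q : pt J tp) (F : pt J tp -> C) : Prop :=
  forall d, exRC (fun s => F (shift J tp q d s)).

Definition is_derivation {J tp} (q : pt J tp) (del : (pt J tp -> C) -> C) : Prop :=
  [/\ forall F G, diffat q F -> diffat q G -> del (fun p => F p + G p) = del F + del G,
      forall F G, diffat q F -> diffat q G -> del (fun p => F p * G p) = del F * G q + F q * del G
    & forall c, del (fun _ => c) = RtoC 0].

Section Derivations.
Context {J : nat} {tp : 'I_J -> stype} {q : pt J tp}.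
Local Notation pt := (pt J tp).
Implicit Types (F G : pt -> C).

Lemma diffat_const c : diffat q (fun _ => c).
Proof. by move=> d; apply: exRC_const. Qed.

Lemma diffat_add F G : diffat q F -> diffat q G -> diffat q (fun p => F p + G p).
Proof. by move=> dF dG d; apply: exRC_add. Qed.

Lemma diffat_mul F G : diffat q F -> diffat q G -> diffat q (fun p => F p * G p).
Proof. by move=> dF dG d; apply: exRC_mul. Qed.

Lemma diffat_opp F : diffat q F -> diffat q (fun p => - F p).
Proof.
move=> dF d; have -> : (fun s => - F (shift J tp q d s))
                       = (fun s => RtoC (-1) * F (shift J tp q d s)).
  by apply: functional_extensionality => s; ring.
exact: exRC_mul (exRC_const _) (dF d).
Qed.

Lemma diffat_conj F : diffat q F -> diffat q (fun p => Cconj (F p)).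
Proof. by move=> dF d; apply: exRC_conj. Qed.

Lemma diffat_big {T : Type} (F : T -> pt -> C) (r : seq T) :
  (forall i, diffat q (F i)) -> diffat q (fun p => \big[Cplus/RtoC 0]_(i <- r) F i p).
Proof.
move=> dF; elim: r => [|i r IH].
  have -> : (fun p => \big[Cplus/RtoC 0]_(i <- [::]) F i p) = (fun _ => RtoC 0).
    by apply: functional_extensionality => p; rewrite big_nil.
  exact: diffat_const.
have -> : (fun p => \big[Cplus/RtoC 0]_(j <- i :: r) F j p)
        = (fun p => F i p + \big[Cplus/RtoC 0]_(j <- r) F j p).
  by apply: functional_extensionality => p; rewrite big_cons.
exact: diffat_add.
Qed.

Lemma diffat_sum {T : finType} (F : T -> pt -> C) :
  (forall i, diffat q (F i)) -> diffat q (fun p => csum (fun i => F i p)).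
Proof. exact: diffat_big. Qed.

Section Derivation.
Context {del : (pt -> C) -> C}.
Hypothesis del_der : is_derivation q del.

Lemma derD F G : diffat q F -> diffat q G -> del (fun p => F p + G p) = del F + del G.
Proof. by case: del_der => D _ _; apply: D. Qed.

Lemma derM F G : diffat q F -> diffat q G ->
  del (fun p => F p * G p) = del F * G q + F q * del G.
Proof. by case: del_der => _ D _; apply: D. Qed.

Lemma der_const c : del (fun _ => c) = RtoC 0.
Proof. by case: del_der. Qed.

Lemma derN F : diffat q F -> del (fun p => - F p) = - del F.
Proof.
move=> dF; have -> : (fun p => - F p) = (fun p => RtoC (-1) * F p).
  by apply: functional_extensionality => p; ring.
rewrite derM ?der_const //; [ring | exact: diffat_const].
Qed.

Lemma der_sum {T : finType} (F : T -> pt -> C) : (forall i, diffat q (F i)) ->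
  del (fun p => csum (fun i => F i p)) = csum (fun i => del (F i)).
Proof.
move=> dF; rewrite /csum; elim: (index_enum T) => [|i r IH].
  have -> : (fun p => \big[Cplus/RtoC 0]_(i <- [::]) F i p) = (fun _ => RtoC 0).
    by apply: functional_extensionality => p; rewrite big_nil.
  by rewrite big_nil der_const.
have -> : (fun p => \big[Cplus/RtoC 0]_(j <- i :: r) F j p)
        = (fun p => F i p + \big[Cplus/RtoC 0]_(j <- r) F j p).
  by apply: functional_extensionality => p; rewrite big_cons.
by rewrite big_cons derD // ?IH //; apply: diffat_big.
Qed.

End Derivation.

Lemma pd_derivation d : is_derivation q (fun F => pd J tp d F q).
Proof.
split=> [F G dF dG|F G dF dG|c]; rewrite /Defs.pd.
- exact: dRC_add.
- by rewrite dRC_mul // !shift0.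
- exact: dRC_const.
Qed.

Lemma derivation_comb {E : finType} (w : E -> C) (del : E -> (pt -> C) -> C) :
  (forall e, is_derivation q (del e)) -> is_derivation q (fun F => csum (fun e => w e * del e F)).
Proof.
move=> der; split=> [F G dF dG|F G dF dG|c].
- by rewrite -csumD; apply: csum_ext => e; rewrite (derD (der e)) //; ring.
- rewrite csumMr csumMl -csumD; apply: csum_ext => e.
  by rewrite (derM (der e)) //; ring.
- by rewrite -(csum0 E); apply: csum_ext => e; rewrite (der_const (der e)); ring.
Qed.

End Derivations.

Section Shifts.
Context {J : nat} {tp : 'I_J -> stype}.
Local Notation pt := (pt J tp).
Local Notation shift := (shift J tp).

Lemma shift_shift (p : pt) d u h : shift (shift p d u) d h = shift p d (Rplus h u).
Proof.
case: p => x z; case: d => [k|c|c] /=; congr pair;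
  apply: functional_extensionality => l; rewrite /xshift /sshift;
  case: eqP => // ->; rewrite ?eqxx; try ring; apply: injective_projections => /=; ring.
Qed.

Lemma shiftC (p : pt) a b u v : shift (shift p a u) b v = shift (shift p b v) a u.
Proof.
case: p => x z; case: a => [k|c|c]; case: b => [k'|c'|c'] /=; congr pair;
  apply: functional_extensionality => l; rewrite /xshift /sshift;
  repeat case: eqP => //; move=> *; subst; try ring; apply: injective_projections => /=; ring.
Qed.

Lemma ball_shift (p : pt) d (e : posreal) s : Rabs s < e -> ball p e (shift p d s).
Proof.
have ball_R (x h : R) : Rabs h < e -> ball x e (Rplus x h).
  by move=> he; rewrite /ball /= /AbsRing_ball /abs /minus /plus /opp /=;
    rewrite (_ : Rplus (Rplus x h) (Ropp x) = h) //; ring.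
have ball_R0 (x : R) : ball x e (Rplus x R0) by apply: ball_R; rewrite Rabs_R0; apply: cond_pos.
case: p => x z; case: d => [k|c|c] se; split => /=; try exact: ball_center;
  move=> l; rewrite /xshift /sshift; case: eqP => _; try exact: ball_center;
  [exact: ball_R | split; [exact: ball_R | exact: ball_R0]
                  | split; [exact: ball_R0 | exact: ball_R]].
Qed.

Lemma ball_shift2 (p : pt) a b (e : posreal) u v :
  Rabs u < pos_div_2 e -> Rabs v < pos_div_2 e -> ball p e (shift (shift p a u) b v).
Proof.
move=> ue ve; have := ball_triangle _ _ _ _ _ (ball_shift p a _ _ ue) (ball_shift _ b _ _ ve).
by rewrite /= -double_var.
Qed.

End Shifts.

(* Coquelicot's [Schwarz] is about real functions, so complex partials are compared
   componentwise through real partials. *)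
Definition pdR {J tp} d (G : pt J tp -> R) : pt J tp -> R :=
  fun p => Derive (fun s => G (shift J tp p d s)) 0.

Section RealSchwarz.
Context {J : nat} {tp : 'I_J -> stype}.
Local Notation pt := (pt J tp).
Local Notation shift := (shift J tp).
Implicit Types (G : pt -> R).

Lemma Derive_shift G p d u : Derive (fun z => G (shift p d z)) u = pdR d G (shift p d u).
Proof.
rewrite /pdR.
have -> : (fun s => G (shift (shift p d u) d s)) = (fun s => G (shift p d (Rplus s u))).
  by apply: functional_extensionality => s; rewrite shift_shift.
have := Derive_n_comp_trans (fun z => G (shift p d z)) 1 0 u.
by rewrite Rplus_0_l => /= <-.
Qed.

Lemma ex_derive_shift G p d u :
  ex_derive (fun h => G (shift (shift p d u) d h)) 0 -> ex_derive (fun z => G (shift p d z)) u.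
Proof.
move=> ex; have := ex_derive_n_comp_trans (fun h => G (shift (shift p d u) d h)) 1 u (Ropp u).
rewrite Rplus_opp_r => /(_ ex) /=.
congr ex_derive; apply: functional_extensionality => y.
by rewrite shift_shift; congr (G (shift p d _)); ring.
Qed.

Lemma continuity_2d_shift G p a b :
  continuous G p -> continuity_2d_pt (fun u v => G (shift (shift p a u) b v)) 0 0.
Proof.
move=> cG e; have [del near_p] := proj1 (filterlim_locally G (G p)) cG e.
exists (pos_div_2 del) => u v; rewrite !Rminus_0_r !shift0 => ud vd.
exact: near_p (ball_shift2 _ _ _ _ _ _ ud vd).
Qed.

Lemma Derive_shift_l G p a b u v :
  Derive (fun t => G (shift (shift p a t) b v)) u = pdR a G (shift (shift p a u) b v).
Proof.
rewrite [in RHS]shiftC -Derive_shift; congr Derive.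
by apply: functional_extensionality => t; rewrite shiftC.
Qed.

Lemma ex_derive_shift_l G p a b u v :
  ex_derive (fun h => G (shift (shift (shift p a u) b v) a h)) 0 ->
  ex_derive (fun t => G (shift (shift p a t) b v)) u.
Proof.
rewrite [shift (shift p a u) b v]shiftC => /ex_derive_shift.
by congr ex_derive; apply: functional_extensionality => t; rewrite shiftC.
Qed.

Lemma pdR_comm G p a b (e : posreal) :
  (forall x, ball p e x -> forall d, [/\ ex_derive (fun s => G (shift x d s)) 0,
     ex_derive (fun s => pdR a G (shift x d s)) 0
   & ex_derive (fun s => pdR b G (shift x d s)) 0]) ->
  continuous (pdR a (pdR b G)) p -> continuous (pdR b (pdR a G)) p ->
  pdR a (pdR b G) p = pdR b (pdR a G) p.
Proof.
move=> exG cab cba; pose P u v := shift (shift p a u) b v.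
have Db u : (fun z => Derive (fun t => G (P z t)) u) = (fun z => pdR b G (P z u)).
  by apply: functional_extensionality => z; rewrite Derive_shift.
have Da u : (fun z => Derive (fun t => G (P t z)) u) = (fun z => pdR a G (P u z)).
  by apply: functional_extensionality => z; rewrite Derive_shift_l.
have Dab : (fun u v => Derive (fun z => Derive (fun t => G (P z t)) v) u)
         = (fun u v => pdR a (pdR b G) (P u v)).
  by do 2 apply: functional_extensionality => ?; rewrite Db Derive_shift_l.
have Dba : (fun u v => Derive (fun z => Derive (fun t => G (P t z)) u) v)
         = (fun u v => pdR b (pdR a G) (P u v)).
  by do 2 apply: functional_extensionality => ?; rewrite Da Derive_shift.
rewrite -(shift0 p a) -(shift0 (shift p a 0) b) -/(P 0 0).
rewrite -[LHS]/((fun u v => pdR a (pdR b G) (P u v)) 0 0) -Dab.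
rewrite -[RHS]/((fun u v => pdR b (pdR a G) (P u v)) 0 0) -Dba.
apply: (Schwarz (fun u v => G (P u v))); cbv beta.
- exists (pos_div_2 e) => u v; rewrite !Rminus_0_r => ue ve.
  have [exa _ exba] := exG _ (ball_shift2 _ a b _ _ _ ue ve) a.
  have [exb exab _] := exG _ (ball_shift2 _ a b _ _ _ ue ve) b.
  rewrite Db Da; split; [|split; [|split]].
  + exact: ex_derive_shift_l.
  + exact: ex_derive_shift.
  + exact: (ex_derive_shift_l (pdR b G)).
  + exact: (ex_derive_shift (pdR a G)).
- by rewrite Dab; apply: continuity_2d_shift.
- by rewrite Dba; apply: continuity_2d_shift.
Qed.

End RealSchwarz.

Lemma continuous_fst_comp {U : UniformSpace} (H : U -> C) x :
  continuous H x -> continuous (fun p => fst (H p)) x.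
Proof. by move=> cH; apply: continuous_comp => //; case: (H x) => ? ?; apply: continuous_fst. Qed.

Lemma continuous_snd_comp {U : UniformSpace} (H : U -> C) x :
  continuous H x -> continuous (fun p => snd (H p)) x.
Proof. by move=> cH; apply: continuous_comp => //; case: (H x) => ? ?; apply: continuous_snd. Qed.

Section Smooth.
Context {J : nat} {tp : 'I_J -> stype}.
Variable Ux : ('I_4 -> R) -> Prop.
Local Notation smooth := (smooth_on J tp (fun p => Ux p.1)).
Local Notation pd := (pd J tp).
Variable F : pt J tp -> C.
Hypothesis sF : smooth F.

Lemma smooth_diffat q : Ux q.1 -> diffat q F.
Proof. by move=> Uq; apply: (proj2 (sF [::] q Uq)). Qed.

Lemma smooth_diffat_pd q d : Ux q.1 -> diffat q (pd d F).
Proof. by move=> Uq; apply: (proj2 (sF [:: d] q Uq)). Qed.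

Lemma smooth_pd_comm q a b : open Ux -> Ux q.1 -> pd a (pd b F) q = pd b (pd a F) q.
Proof.
move=> oU Uq; have [e ball_U] := oU _ Uq.
have ex ds x d : ball q e x -> exRC (fun s => pds J tp ds F (shift J tp x d s)).
  by move=> [qx _]; apply: (proj2 (sF ds x (ball_U _ qx))).
have cab := proj1 (sF [:: a; b] q Uq); have cba := proj1 (sF [:: b; a] q Uq).
apply: injective_projections.
- apply: (pdR_comm (fun p => fst (F p)) q a b e); last 2 first.
  + exact: continuous_fst_comp cab.
  + exact: continuous_fst_comp cba.
  by move=> x qx d; split; [case: (ex [::] x d qx) | case: (ex [:: a] x d qx)
                           | case: (ex [:: b] x d qx)].
- apply: (pdR_comm (fun p => snd (F p)) q a b e); last 2 first.
  + exact: continuous_snd_comp cab.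
  + exact: continuous_snd_comp cba.
  by move=> x qx d; split; [case: (ex [::] x d qx) | case: (ex [:: a] x d qx)
                           | case: (ex [:: b] x d qx)].
Qed.

End Smooth.

Lemma half_1_sub_Ci2 : / RtoC 2 * (RtoC 1 - Ci * Ci) = RtoC 1.
Proof.
have two0 : RtoC 2 <> RtoC 0.
  by case=> two; have := Rlt_0_2; rewrite two => /Rlt_irrefl.
rewrite (_ : RtoC 1 - Ci * Ci = RtoC 2); first exact: Cinv_l.
by apply: injective_projections => /=; ring.
Qed.

Lemma half_1_add_Ci2 : / RtoC 2 * (RtoC 1 + Ci * Ci) = RtoC 0.
Proof.
rewrite (_ : RtoC 1 + Ci * Ci = RtoC 0) ?Cmult_0_r //.
by apply: injective_projections => /=; ring.
Qed.

Lemma Cconj_Ci : Cconj Ci = - Ci.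
Proof. by apply: injective_projections => /=; ring. Qed.

Lemma Cconj_RtoC (r : R) : Cconj (RtoC r) = RtoC r.
Proof. by apply: injective_projections => /=; ring. Qed.

Section Coordinates.
Context {J : nat} {tp : 'I_J -> stype}.
Local Notation pt := (pt J tp).
Local Notation pd := (pd J tp).
Local Notation dz := (dz J tp).
Local Notation dzb := (dzb J tp).
Implicit Types (c : coordT J tp) (q : pt).

Definition coord c : pt -> C := fun p => p.2 c.

Lemma pd_conj d (G : pt -> C) q : pd d (fun p => Cconj (G p)) q = Cconj (pd d G q).
Proof. by rewrite /Defs.pd dRC_conj. Qed.

Lemma Derive_shift_id (a : R) : Derive (fun s => Rplus a s) R0 = R1.
Proof.
rewrite Derive_plus; [|exact: ex_derive_const|exact: ex_derive_id].
by rewrite Derive_const Derive_id Rplus_0_l.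
Qed.

Lemma ex_derive_shift_id (a : R) : ex_derive (fun s => Rplus a s) R0.
Proof. apply: ex_derive_plus; [exact: ex_derive_const | exact: ex_derive_id]. Qed.

Lemma diffat_coord c q : diffat q (coord c).
Proof.
case=> [k|c'|c']; rewrite /coord /=; first exact: exRC_const;
  rewrite /sshift; case: eqP => _; try exact: exRC_const.
- by split => /=; [apply: ex_derive_shift_id | apply: ex_derive_const].
- by split => /=; [apply: ex_derive_const | apply: ex_derive_shift_id].
Qed.

Lemma pd_coord_x k c q : pd (Defs.Dx J tp k) (coord c) q = RtoC 0.
Proof. exact: dRC_const. Qed.

Lemma pd_coord_re c c' q : pd (Dre J tp c') (coord c) q = if c == c' then RtoC 1 else RtoC 0.
Proof.
rewrite /Defs.pd /coord /= /sshift; case: eqP => _; last exact: dRC_const.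
by rewrite /dRC /= Derive_shift_id Derive_const.
Qed.

Lemma pd_coord_im c c' q : pd (Dim J tp c') (coord c) q = if c == c' then Ci else RtoC 0.
Proof.
rewrite /Defs.pd /coord /= /sshift; case: eqP => _; last exact: dRC_const.
by rewrite /dRC /= Derive_shift_id Derive_const.
Qed.

Lemma dz_coord c c' q : dz c' (coord c) q = if c == c' then RtoC 1 else RtoC 0.
Proof.
rewrite /Defs.dz pd_coord_re pd_coord_im; case: eqP => _; first exact: half_1_sub_Ci2.
ring.
Qed.

Lemma dzb_coord c c' q : dzb c' (coord c) q = RtoC 0.
Proof.
rewrite /Defs.dzb pd_coord_re pd_coord_im; case: eqP => _; first exact: half_1_add_Ci2.
ring.
Qed.

Lemma dz_conj_coord c c' q : dz c' (fun p => Cconj (coord c p)) q = RtoC 0.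
Proof.
rewrite /Defs.dz !pd_conj pd_coord_re pd_coord_im.
case: eqP => _; rewrite ?Cconj_Ci !Cconj_RtoC; last ring.
by rewrite -[RHS]half_1_add_Ci2; congr (_ * _); ring.
Qed.

Lemma dzb_conj_coord c c' q :
  dzb c' (fun p => Cconj (coord c p)) q = if c == c' then RtoC 1 else RtoC 0.
Proof.
rewrite /Defs.dzb !pd_conj pd_coord_re pd_coord_im.
case: eqP => _; rewrite ?Cconj_Ci !Cconj_RtoC; last ring.
by rewrite -[RHS]half_1_sub_Ci2; congr (_ * _); ring.
Qed.

End Coordinates.

Section DerivationOfAction.
Context {J : nat} {tp : 'I_J -> stype} {q : pt J tp} {t : stype}.
Local Notation pt := (pt J tp).

Section DerivationOfIndexAction.
Context {n : nat} {T : finType}.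
Variables (get : midx t -> {ffun 'I_n -> T}) (set : midx t -> {ffun 'I_n -> T} -> midx t).
Variables (M : pt -> T -> T -> C) (Z : midx t -> pt -> C).
Hypotheses (dM : forall x y, diffat q (fun p => M p x y)) (dZ : forall I, diffat q (Z I)).

Lemma diffat_iact I : diffat q (fun p => iact get set (M p) (Z^~ p) I).
Proof. by apply: diffat_sum => mu; apply: diffat_sum => v; apply: diffat_mul. Qed.

Lemma der_iact del I : is_derivation q del ->
  del (fun p => iact get set (M p) (Z^~ p) I)
  = iact get set (fun x y => del (fun p => M p x y)) (Z^~ q) I
  + iact get set (M q) (fun J => del (Z J)) I.
Proof.
move=> der; rewrite /iact (der_sum der) => [|mu]; last by apply: diffat_sum => v; apply: diffat_mul.
rewrite -csumD; apply: csum_ext => mu.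
rewrite (der_sum der); last by move=> v; apply: diffat_mul.
by rewrite -csumD; apply: csum_ext => v; rewrite (derM der).
Qed.

End DerivationOfIndexAction.

Variables (a b : 'I_2 -> 'I_2 -> pt -> C) (g : 'I_4 -> 'I_4 -> pt -> C) (Z : midx t -> pt -> C).
Hypotheses (da : forall k l, diffat q (a k l)) (db : forall k l, diffat q (b k l)).
Hypotheses (dg : forall k l, diffat q (g k l)) (dZ : forall I, diffat q (Z I)).

Local Notation Lslot_at s p :=
  (Lslot s (fun k l => a k l p) (fun k l => b k l p) (fun k l => g k l p) (Z^~ p)).

Lemma Lf_slots I : Lf J tp a b g Z I = fun p => csum (fun s => Lslot_at s p I).
Proof. by apply: functional_extensionality => p; rewrite /Lf Lop_slots. Qed.

Lemma diffat_opp_tr {T : Type} (M : T -> T -> pt -> C) :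
  (forall k l, diffat q (M k l)) -> forall x y, diffat q (fun p => opp_tr (fun k l => M k l p) x y).
Proof. by move=> dM x y; exact: diffat_opp (dM y x). Qed.

Lemma diffat_Lslot (s : 'I_6) I :
  diffat q (fun p => Lslot_at s p I).
Proof.
by case: s => [[|[|[|[|[|[|//]]]]]] ?]; rewrite /Lslot /=; apply: diffat_iact => //;
  apply: diffat_opp_tr.
Qed.

Lemma diffat_Lf I : diffat q (Lf J tp a b g Z I).
Proof.
by rewrite Lf_slots; apply: diffat_sum => s; apply: diffat_Lslot.
Qed.

Variable del : (pt -> C) -> C.
Hypothesis der : is_derivation q del.

Lemma der_opp_tr {T : Type} (M : T -> T -> pt -> C) x y : (forall k l, diffat q (M k l)) ->
  del (fun p => opp_tr (fun k l => M k l p) x y) = opp_tr (fun k l => del (M k l)) x y.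
Proof. by move=> dM; rewrite /opp_tr (derN der). Qed.

Lemma der_Lslot (s : 'I_6) I :
  del (fun p => Lslot_at s p I)
  = Lslot s (fun k l => del (a k l)) (fun k l => del (b k l)) (fun k l => del (g k l)) (Z^~ q) I
  + Lslot s (fun k l => a k l q) (fun k l => b k l q) (fun k l => g k l q) (fun J => del (Z J)) I.
Proof.
case: s => [[|[|[|[|[|[|//]]]]]] ?]; rewrite /Lslot /= der_iact //;
  try (by move=> *; apply: diffat_opp_tr); congr (_ + _); apply: eq_iact => // x y;
  exact: der_opp_tr.
Qed.

Lemma der_Lf I :
  del (Lf J tp a b g Z I)
  = Lop (fun k l => del (a k l)) (fun k l => del (b k l)) (fun k l => del (g k l)) (Z^~ q) I
  + Lop (fun k l => a k l q) (fun k l => b k l q) (fun k l => g k l q) (fun J => del (Z J)) I.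
Proof.
rewrite Lf_slots (der_sum der); last by move=> s; apply: diffat_Lslot.
by rewrite !Lop_slots -csumD; apply: csum_ext => s; rewrite der_Lslot.
Qed.

End DerivationOfAction.

Definition vfield {J tp} {E : finType} (del : E -> (pt J tp -> C) -> pt J tp -> C)
    (k : E -> pt J tp -> C) (F : pt J tp -> C) : pt J tp -> C :=
  fun p => csum (fun e => k e p * del e F p).

Section VectorFields.
Context {J : nat} {tp : 'I_J -> stype} {E : finType}.
Local Notation pt := (pt J tp).
Variables (del : E -> (pt -> C) -> pt -> C) (q : pt).
Hypothesis der : forall e, is_derivation q (fun G => del e G q).
Local Notation vfield := (vfield del).

Lemma vfield_derivation k : is_derivation q (fun G => vfield k G q).
Proof. exact: (derivation_comb (fun e => k e q) (fun e G => del e G q)). Qed.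

Lemma vfield_vfield ka kb F :
  (forall e, diffat q (kb e)) -> (forall e, diffat q (del e F)) ->
  vfield ka (vfield kb F) q = csum (fun e' => vfield ka (kb e') q * del e' F q)
    + csum (fun e => csum (fun e' => ka e q * kb e' q * del e (del e' F) q)).
Proof.
move=> dk dF; rewrite /vfield.
transitivity (csum (fun e => csum (fun e' =>
  ka e q * del e (kb e') q * del e' F q + ka e q * kb e' q * del e (del e' F) q))).
  apply: csum_ext => e; rewrite (der_sum (der e)); last by move=> e'; apply: diffat_mul.
  by rewrite csumMl; apply: csum_ext => e'; rewrite (derM (der e)) //; ring.
under csum_ext => e do rewrite csumD.
rewrite csumD exchange_csum; congr (_ + _); apply: csum_ext => e'.
by rewrite csumMr.
Qed.

Lemma vfield_commutator k1 k2 F :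
  (forall e, diffat q (k1 e)) -> (forall e, diffat q (k2 e)) -> (forall e, diffat q (del e F)) ->
  (forall e e', del e (del e' F) q = del e' (del e F) q) ->
  vfield k1 (vfield k2 F) q - vfield k2 (vfield k1 F) q
  = csum (fun e => (vfield k1 (k2 e) q - vfield k2 (k1 e) q) * del e F q).
Proof.
move=> dk1 dk2 dF delC; rewrite !vfield_vfield //.
have -> : csum (fun e => csum (fun e' => k2 e q * k1 e' q * del e (del e' F) q))
        = csum (fun e => csum (fun e' => k1 e q * k2 e' q * del e (del e' F) q)).
  by rewrite exchange_csum; do 2 apply: csum_ext => ?; rewrite delC; ring.
rewrite (_ : forall x y z : C, x + z - (y + z) = x - y) => [|*]; last by ring.
by rewrite -csumB; apply: csum_ext => e; ring.
Qed.

End VectorFields.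

Definition taucoordT J (tp : 'I_J -> stype) := {P : 'I_J & midx (tau_ty (tp P))}.

(* Indexes the derivations d/dx^k, d/dS[P]^I_J and d/dtau(S[P])^I'_J' of the chart of N. *)
Definition basis J (tp : 'I_J -> stype) := ('I_4 + (coordT J tp + taucoordT J tp))%type.

Definition taucoord {J tp} (y : taucoordT J tp) : coordT J tp :=
  mkc J tp (tag y) (swap_idx (tagged y)).

Definition basis_der {J tp} (e : basis J tp) (F : pt J tp -> C) : pt J tp -> C :=
  match e with
  | inl k => pd J tp (Defs.Dx J tp k) F
  | inr (inl c) => dz J tp c F
  | inr (inr y) => dzb J tp (taucoord y) F
  end.

Section BasisDerivations.
Context {J : nat} {tp : 'I_J -> stype}.
Local Notation pt := (pt J tp).
Local Notation pd := (pd J tp).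
Local Notation dir := (dir J tp).
Implicit Types (e : basis J tp) (F : pt -> C) (q : pt).

Definition basis_dir e (re : bool) : dir :=
  match e with
  | inl k => Defs.Dx J tp k
  | inr (inl c) => if re then Dre J tp c else Dim J tp c
  | inr (inr y) => if re then Dre J tp (taucoord y) else Dim J tp (taucoord y)
  end.

Definition basis_weight e (re : bool) : C :=
  match e, re with
  | inl _, true => RtoC 1
  | inl _, false => RtoC 0
  | inr _, true => / RtoC 2
  | inr (inl _), false => - (/ RtoC 2 * Ci)
  | inr (inr _), false => / RtoC 2 * Ci
  end.

Lemma basis_derE e F :
  basis_der e F = fun p => csum (fun re => basis_weight e re * pd (basis_dir e re) F p).
Proof.
apply: functional_extensionality => p; rewrite /csum big_bool.
by case: e => [k|[c|y]]; rewrite /= ?/Defs.dz ?/Defs.dzb; ring.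
Qed.

Lemma basis_der_derivation e q : is_derivation q (fun F => basis_der e F q).
Proof.
under [fun F => _]functional_extensionality => F do rewrite basis_derE.
exact: derivation_comb (fun re => pd_derivation _).
Qed.

Lemma diffat_basis_der e F q : (forall d, diffat q (pd d F)) -> diffat q (basis_der e F).
Proof.
move=> dF; rewrite basis_derE; apply: diffat_sum => re.
by apply: diffat_mul => //; apply: diffat_const.
Qed.

Lemma basis_derC e e' F q : (forall d, diffat q (pd d F)) ->
  (forall d d', pd d (pd d' F) q = pd d' (pd d F) q) ->
  basis_der e (basis_der e' F) q = basis_der e' (basis_der e F) q.
Proof.
move=> dF FC.
have pd_basis_der e0 d : pd d (basis_der e0 F) q
    = csum (fun re => basis_weight e0 re * pd d (pd (basis_dir e0 re) F) q).
  have der := pd_derivation (q := q) d.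
  rewrite basis_derE (der_sum der) => [|re]; last by apply: diffat_mul => //; apply: diffat_const.
  by apply: csum_ext => re; rewrite (derM der) ?(der_const der) //; [ring | apply: diffat_const].
rewrite [basis_der e (basis_der e' F)]basis_derE [basis_der e' (basis_der e F)]basis_derE /=.
under csum_ext => re do rewrite pd_basis_der csumMl.
under [RHS]csum_ext => re do rewrite pd_basis_der csumMl.
by rewrite exchange_csum; do 2 apply: csum_ext => ?; rewrite FC; ring.
Qed.

End BasisDerivations.

Definition swap_inv {t : stype} (I : midx t) : midx (tau_ty t) :=
  @mk (tau_ty t) (ic I) (id' I) (ia I) (ib I) (ie I) (if' I).

Lemma swap_idxK {t : stype} (I : midx (tau_ty t)) : swap_inv (swap_idx I) = I.
Proof. by case: I => [[[[[? ?] ?] ?] ?] ?]. Qed.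

Lemma taucoord_eq {J tp} (y y' : taucoordT J tp) : (taucoord y == taucoord y') = (y == y').
Proof.
apply/eqP/eqP => [|-> //].
move=> /(f_equal (fun c : coordT J tp =>
  existT (fun P => midx (tau_ty (tp P))) (tag c) (swap_inv (tagged c)))).
by rewrite /= !swap_idxK; case: y; case: y'.
Qed.

Section BasisCoordinates.
Context {J : nat} {tp : 'I_J -> stype}.
Implicit Types (e : basis J tp) (q : pt J tp).

Lemma basis_der_coord e c q : basis_der e (coord c) q = if e == inr (inl c) then RtoC 1 else RtoC 0.
Proof.
case: e => [k|[c'|y]] /=; [exact: pd_coord_x | | exact: dzb_coord].
by rewrite dz_coord eq_sym.
Qed.

Lemma basis_der_conj_coord e y q :
  basis_der e (fun p => Cconj (coord (taucoord y) p)) q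
  = if e == inr (inr y) then RtoC 1 else RtoC 0.
Proof.
case: e => [k|[c|y']] /=.
- by rewrite pd_conj pd_coord_x Cconj_RtoC.
- exact: dz_conj_coord.
- by rewrite dzb_conj_coord taucoord_eq eq_sym.
Qed.

Lemma basis_der_xfun e (f : ('I_4 -> R) -> R) q :
  basis_der e (fun p => RtoC (f p.1)) q
  = if e is inl l then RtoC (Derive (fun s => f (xshift q.1 l s)) R0) else RtoC 0.
Proof.
case: e => [l|[c|y]]; rewrite /= ?/Defs.dz ?/Defs.dzb /Defs.pd /= ?dRC_const; try ring.
by rewrite /dRC /= Derive_const.
Qed.

End BasisCoordinates.

(* [ring] compares atoms syntactically; [set] first identifies the eta-variants of each
   [Lop] term. *)
Ltac ring_Lop := repeat match goal with
  |- context [Lop ?a ?b ?g ?X ?I] => let z := fresh "z" in set z := Lop a b g X I end; ring.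

Section Chart.
Variables (J : nat) (tp : 'I_J -> stype).
Variables (Ups : 'I_4 -> 'I_4 -> ('I_4 -> R) -> R) (cc : 'I_4 -> 'I_4 -> 'I_4 -> ('I_4 -> R) -> R).
Variables (A Ab : 'I_4 -> 'I_2 -> 'I_2 -> pt J tp -> C).
Variable Gam : 'I_4 -> 'I_4 -> 'I_4 -> pt J tp -> C.
Local Notation pt := (pt J tp).
Local Notation Dop := (Dop J tp Ups A Ab Gam).
Local Notation Lj := (Lj J tp A Ab Gam).
Local Notation Sf := (Sf J tp).
Local Notation tauSf := (tauSf J tp).
Local Notation nab := (nab J tp Ups A Ab Gam).
Local Notation nabV := (nabV J tp Ups A Ab Gam).
Local Notation vcomp := (vcomp J tp).

Definition Dop_coef (i : 'I_4) (e : basis J tp) : pt -> C :=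
  match e with
  | inl k => fun p => RtoC (Ups k i p.1)
  | inr (inl c) => fun p => - Lj i (Sf (tag c)) (tagged c) p
  | inr (inr y) => fun p => - Lj i (tauSf (tag y)) (tagged y) p
  end.

Lemma Dop_vfield i F : Dop i F = vfield basis_der (Dop_coef i) F.
Proof.
have oppM (x y : C) : - (x * y) = - x * y by ring.
apply: functional_extensionality => p.
rewrite /vfield !csum_sum !csum_sig /Defs.Dop /Cminus -Cplus_assoc.
congr (_ + (_ + _)); rewrite csumN; apply: csum_ext => P; rewrite csumN; apply: csum_ext => I.
all: exact: oppM.
Qed.

Lemma Dop_Sf i P I q : Dop i (Sf P I) q = - Lj i (Sf P) I q.
Proof.
rewrite Dop_vfield /vfield.
by under csum_ext => e do rewrite (basis_der_coord e (mkc J tp P I)); rewrite csum_mul_delta.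
Qed.

Lemma Dop_tauSf i P I q : Dop i (tauSf P I) q = - Lj i (tauSf P) I q.
Proof.
rewrite Dop_vfield /vfield.
by under csum_ext => e do rewrite (basis_der_conj_coord e (existT _ P I)); rewrite csum_mul_delta.
Qed.

Lemma Dop_Ups i k j q :
  Dop i (fun p => RtoC (Ups k j p.1)) q
  = RtoC (rsumo (fun l => Rmult (Ups l i q.1) (Derive (fun s => Ups k j (xshift q.1 l s)) R0))).
Proof.
rewrite Dop_vfield /vfield csum_sum [X in _ + X](_ : _ = RtoC 0) ?Cplus_0_r.
  by rewrite RtoC_rsumo; apply: csum_ext => l; rewrite basis_der_xfun RtoC_mult.
by rewrite -(csum0 (coordT J tp + taucoordT J tp)%type); apply: csum_ext => e;
  rewrite basis_der_xfun; ring.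
Qed.

Lemma nabVE t (Y : field J tp vec_ty) (Z : field J tp t) :
  nabV Y Z = fun I p => csum (fun k => vcomp Y k p * nab k Z I p).
Proof. by []. Qed.

Lemma vupper_vidx k : vupper (vidx k) = k.
Proof. by rewrite /vupper /ie /vidx /mk /= ffunE. Qed.

Lemma Lj_vidx j (Y : field J tp vec_ty) k p :
  Lj j Y (vidx k) p = csum (fun v => Gam j k v p * vcomp Y v p).
Proof.
rewrite /Defs.Lj /Lf /Lop /csumo /= !big_ord0 big_ord1.
have -> : ie (vidx k) ord0 = k by rewrite /ie /vidx /mk /= ffunE.
rewrite (_ : \big[Cplus/RtoC 0]_(i < 4) _ = csum (fun v => Gam j k v p * vcomp Y v p)).
  by set s := csum _; rewrite /Cminus; ring.
apply: eq_bigr => v _; congr (_ * Y _ p).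
rewrite /vidx /mk /ia /ib /ic /id' /ie /if' /=; congr (_, _); congr (_, _).
by apply/ffunP => mu; rewrite updE !ffunE (ord1 mu) eqxx.
Qed.

Section AtPoint.
Variable Ux : ('I_4 -> R) -> Prop.
Local Notation smooth := (smooth_on J tp (fun p => Ux p.1)).
Hypothesis open_Ux : open Ux.
Hypothesis bracket : bracket_rel Ux Ups cc.
Hypothesis smooth_Ups : forall k i, smooth (fun p => RtoC (Ups k i p.1)).
Hypothesis smooth_A : forall j k i, smooth (A j k i).
Hypothesis smooth_Ab : forall j k i, smooth (Ab j k i).
Hypothesis smooth_Gam : forall j k i, smooth (Gam j k i).
Variable q : pt.
Hypothesis Uq : Ux q.1.

Local Notation At B m := (fun k l => B m k l q).
Local Notation Rq B i j := (fun p r => Rc J tp Ups cc A Ab Gam B p r i j q).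
Local Notation La m := (Lop (At A m) (At Ab m) (At Gam m)).
Local Notation LR i j := (Lop (Rq A i j) (Rq Ab i j) (Rq Gam i j)).
Local Notation LD i j := (Lop (fun k l => Dop i (A j k l) q) (fun k l => Dop i (Ab j k l) q)
                              (fun k l => Dop i (Gam j k l) q)).
Local Notation XY X Y i j := (vcomp X i q * vcomp Y j q).
Local Notation dU X Y k :=
  (csum (fun j => vcomp X j q * Dop j (vcomp Y k) q - vcomp Y j q * Dop j (vcomp X k) q)).

Lemma diffat_smooth {F} : smooth F -> diffat q F.
Proof. by move=> sF; apply: (smooth_diffat _ _ sF). Qed.

Lemma diffat_Lj t (Z : field J tp t) i I : (forall I', diffat q (Z I')) -> diffat q (Lj i Z I).
Proof. by move=> dZ; rewrite /Defs.Lj; apply: diffat_Lf => // k l; apply: diffat_smooth. Qed.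

Lemma diffat_Dop_coef i e : diffat q (Dop_coef i e).
Proof.
case: e => [k|[c|y]] /=; first exact: diffat_smooth (smooth_Ups _ _).
all: apply: diffat_opp; apply: diffat_Lj => I'; rewrite /Defs.Sf /Defs.tauSf.
- exact: diffat_coord.
- exact: diffat_conj (diffat_coord _ _).
Qed.

Lemma Dop_derivation i : is_derivation q (fun F => Dop i F q).
Proof.
rewrite (_ : (fun F => Dop i F q) = fun F => vfield basis_der (Dop_coef i) F q).
  exact: (vfield_derivation basis_der q (fun e => basis_der_derivation e q)).
by apply: functional_extensionality => F; rewrite Dop_vfield.
Qed.

Lemma diffat_Dop i F : smooth F -> diffat q (Dop i F).
Proof.
move=> sF; rewrite Dop_vfield /vfield; apply: diffat_sum => e; apply: diffat_mul.
  exact: diffat_Dop_coef.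
by apply: diffat_basis_der => d; exact: (smooth_diffat_pd _ _ sF).
Qed.

Lemma Dop_commutator_vfield i j F : smooth F ->
  Dop i (Dop j F) q - Dop j (Dop i F) q
  = csum (fun e => (Dop i (Dop_coef j e) q - Dop j (Dop_coef i e) q) * basis_der e F q).
Proof.
move=> sF; under csum_ext => e do rewrite !Dop_vfield.
rewrite !Dop_vfield; apply: (vfield_commutator basis_der q (fun e => basis_der_derivation e q)).
- exact: diffat_Dop_coef.
- exact: diffat_Dop_coef.
- by move=> e; apply: diffat_basis_der => d; exact: (smooth_diffat_pd _ _ sF).
- move=> e e'; apply: basis_derC => [d|d d']; first exact: (smooth_diffat_pd _ _ sF).
  exact: (smooth_pd_comm _ _ sF).
Qed.

Lemma Dop_Ups_bracket i j k :
  Dop i (fun p => RtoC (Ups k j p.1)) q - Dop j (fun p => RtoC (Ups k i p.1)) q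
  = csumo (fun m => RtoC (cc m i j q.1) * RtoC (Ups k m q.1)).
Proof.
rewrite !Dop_Ups !RtoC_rsumo -csumB.
transitivity (RtoC (rsumo (fun l => Rminus
    (Rmult (Ups l i q.1) (Derive (fun s => Ups k j (xshift q.1 l s)) R0))
    (Rmult (Ups l j q.1) (Derive (fun s => Ups k i (xshift q.1 l s)) R0))))).
  by rewrite RtoC_rsumo; apply: csum_ext => l; rewrite RtoC_minus.
by rewrite bracket // RtoC_rsumo; apply: csum_ext => m; rewrite RtoC_mult.
Qed.

Lemma Dop_Lj i j t (Z : field J tp t) I : (forall I', diffat q (Z I')) ->
  Dop i (Lj j Z I) q
  = LD i j
      (Z^~ q) I
  + La j (fun J0 => Dop i (Z J0) q) I.
Proof.
move=> dZ; exact: (der_Lf _ _ _ _ (fun k l => diffat_smooth (smooth_A j k l))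
  (fun k l => diffat_smooth (smooth_Ab j k l)) (fun k l => diffat_smooth (smooth_Gam j k l)) dZ _
  (Dop_derivation i)).
Qed.

Lemma Lop_curvature t (X : midx t -> C) I i j :
  LR i j X I
  = LD i j X I
  - LD j i X I
  + Lop (mxbracket (At A i) (At A j)) (mxbracket (At Ab i) (At Ab j))
        (mxbracket (At Gam i) (At Gam j)) X I
  - csum (fun m => RtoC (cc m i j q.1) * La m X I).
Proof.
rewrite (eq_Lop _ _ _ _
  (fun x y => Dop i (A j x y) q - Dop j (A i x y) q + mxbracket (At A i) (At A j) x y
              - csum (fun m => RtoC (cc m i j q.1) * A m x y q))
  (fun x y => Dop i (Ab j x y) q - Dop j (Ab i x y) q + mxbracket (At Ab i) (At Ab j) x y
              - csum (fun m => RtoC (cc m i j q.1) * Ab m x y q))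
  (fun x y => Dop i (Gam j x y) q - Dop j (Gam i x y) q + mxbracket (At Gam i) (At Gam j) x y
              - csum (fun m => RtoC (cc m i j q.1) * Gam m x y q)) _ X) //.
by rewrite Lop_subM Lop_addM Lop_subM Lop_sumM.
Qed.

Lemma Dop_Lj_commutator t (S : field J tp t) i j I :
  (forall i' I', Dop i' (S I') q = - Lj i' S I' q) -> (forall I', diffat q (S I')) ->
  Dop i (fun p => - Lj j S I p) q - Dop j (fun p => - Lj i S I p) q
  = csum (fun m => RtoC (cc m i j q.1) * - Lj m S I q) - LR i j (S^~ q) I.
Proof.
move=> DS dS.
rewrite (_ : csum _ = - csum (fun m => RtoC (cc m i j q.1) * Lj m S I q)); last first.
  by rewrite csumN; apply: csum_ext => m; ring.
have DSf i' : (fun J0 => Dop i' (S J0) q) = (fun J0 => - Lj i' S J0 q).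
  by apply: functional_extensionality => J0; rewrite DS.
rewrite !(derN (Dop_derivation _)); try by apply: diffat_Lj.
cbv beta; rewrite !Dop_Lj // !DSf !Lop_oppX.
rewrite Lop_curvature -Lop_commutator /Defs.Lj /Lf; ring_Lop.
Qed.

Definition curv_coef (i j : 'I_4) (e : basis J tp) : C :=
  match e with
  | inl _ => RtoC 0
  | inr (inl c) => - LR i j ((Sf (tag c))^~ q) (tagged c)
  | inr (inr y) => - LR i j ((tauSf (tag y))^~ q) (tagged y)
  end.

Lemma Dop_coef_commutator i j e :
  Dop i (Dop_coef j e) q - Dop j (Dop_coef i e) q
  = csum (fun m => RtoC (cc m i j q.1) * Dop_coef m e q) + curv_coef i j e.
Proof.
case: e => [k|[[P I]|[P I]]] /=; first by rewrite Dop_Ups_bracket Cplus_0_r.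
- rewrite (Dop_Lj_commutator _ (Sf P)) // => *; [exact: Dop_Sf | exact: diffat_coord].
- rewrite (Dop_Lj_commutator _ (tauSf P)) // => *;
    [exact: Dop_tauSf | exact: diffat_conj (diffat_coord _ _)].
Qed.

Lemma Dop_commutator i j F : smooth F ->
  Dop i (Dop j F) q - Dop j (Dop i F) q
  = csum (fun m => RtoC (cc m i j q.1) * Dop m F q)
  + csum (fun e => curv_coef i j e * basis_der e F q).
Proof.
move=> sF; rewrite Dop_commutator_vfield //.
under csum_ext => e do rewrite Dop_coef_commutator Cmult_plus_distr_r.
rewrite csumD; congr (_ + _).
under csum_ext => e do rewrite csumMr.
rewrite exchange_csum; apply: csum_ext => m.
by rewrite Dop_vfield /vfield csumMl; apply: csum_ext => e; ring.
Qed.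

Lemma nab_nab t (Z : field J tp t) i j I : (forall I', smooth (Z I')) ->
  nab i (nab j Z) I q
  = Dop i (Dop j (Z I)) q
  + LD i j
      (Z^~ q) I
  + La j (fun J0 => Dop i (Z J0) q) I
  + La i (fun J0 => Dop j (Z J0) q) I
  + La i (La j (Z^~ q)) I.
Proof.
move=> sZ; have dZ I' := diffat_smooth (sZ I').
rewrite /Defs.nab (derD (Dop_derivation i)); [|exact: diffat_Dop|exact: diffat_Lj].
by rewrite Dop_Lj // /Defs.Lj /Lf Lop_addX; ring_Lop.
Qed.

Lemma nab_commutator t (Z : field J tp t) i j I : (forall I', smooth (Z I')) ->
  nab i (nab j Z) I q - nab j (nab i Z) I q
  = csum (fun m => RtoC (cc m i j q.1) * nab m Z I q)
  + csum (fun e => curv_coef i j e * basis_der e (Z I) q)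
  + LR i j (Z^~ q) I.
Proof.
move=> sZ; rewrite !nab_nab //.
have -> : forall d1 d2 l1 l2 x y u v : C,
    d1 + l1 + x + y + u - (d2 + l2 + y + x + v) = (d1 - d2) + (l1 - l2 + (u - v)) by move=> *; ring.
rewrite (Dop_commutator _ _ _ (sZ I)) Lop_commutator Lop_curvature /Defs.nab /Defs.Lj /Lf.
rewrite (_ : csum (fun m => _ * (Dop m (Z I) q + _))
  = csum (fun m => RtoC (cc m i j q.1) * Dop m (Z I) q)
  + csum (fun m => RtoC (cc m i j q.1) * La m (Z^~ q) I)).
  ring_Lop.
by rewrite -csumD; apply: csum_ext => m; ring.
Qed.

Lemma nab_nabV t (Y : field J tp vec_ty) (Z : field J tp t) j I :
  (forall I', smooth (Y I')) -> (forall I', smooth (Z I')) ->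
  nab j (nabV Y Z) I q
  = csum (fun k => Dop j (vcomp Y k) q * nab k Z I q + vcomp Y k q * nab j (nab k Z) I q).
Proof.
move=> sY sZ; have dnab k I' : diffat q (nab k Z I').
  apply: diffat_add; [exact: diffat_Dop | exact: diffat_Lj (fun I0 => diffat_smooth (sZ I0))].
rewrite {1}/Defs.nab nabVE /Defs.Lj /Lf.
rewrite (der_sum (Dop_derivation j)); last by move=> k; apply: diffat_mul (diffat_smooth (sY _)) _.
rewrite Lop_sumX -csumD; apply: csum_ext => k.
rewrite (derM (Dop_derivation j)) //; last exact: diffat_smooth (sY _).
rewrite /Defs.nab /Defs.Lj /Lf; ring_Lop.
Qed.

Lemma nabV_commutator_expand t (X Y : field J tp vec_ty) (Z : field J tp t) I :
  (forall I', smooth (X I')) -> (forall I', smooth (Y I')) -> (forall I', smooth (Z I')) ->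
  nabV X (nabV Y Z) I q - nabV Y (nabV X Z) I q
  = csum (fun k => dU X Y k * nab k Z I q)
  + csum (fun i => csum (fun j => XY X Y i j * (nab i (nab j Z) I q - nab j (nab i Z) I q))).
Proof.
move=> sX sY sZ; rewrite [nabV X _]nabVE [nabV Y (nabV X Z)]nabVE /=.
under csum_ext => k do rewrite nab_nabV //.
under [in X in _ - X]csum_ext => k do rewrite nab_nabV //.
have expand (U V : field J tp vec_ty) :
  csum (fun k => vcomp U k q * csum (fun j => Dop k (vcomp V j) q * nab j Z I q
                                            + vcomp V j q * nab k (nab j Z) I q))
  = csum (fun k => csum (fun j => vcomp U k q * Dop k (vcomp V j) q * nab j Z I q))
  + csum (fun k => csum (fun j => vcomp U k q * vcomp V j q * nab k (nab j Z) I q)).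
  by rewrite -csumD; apply: csum_ext => k; rewrite csumMl -csumD; apply: csum_ext => j; ring.
rewrite !expand.
set P1 := csum (fun k => csum (fun j => vcomp X k q * Dop k (vcomp Y j) q * nab j Z I q)).
set P2 := csum (fun k => csum (fun j => vcomp X k q * vcomp Y j q * nab k (nab j Z) I q)).
set Q1 := csum (fun k => csum (fun j => vcomp Y k q * Dop k (vcomp X j) q * nab j Z I q)).
set Q2 := csum (fun k => csum (fun j => vcomp Y k q * vcomp X j q * nab k (nab j Z) I q)).
have -> : csum (fun k => dU X Y k * nab k Z I q) = P1 - Q1.
  rewrite /P1 /Q1 [X in _ = X - _]exchange_csum [X in _ = _ - X]exchange_csum -csumB.
  by apply: csum_ext => k; rewrite csumMr -csumB; apply: csum_ext => j; ring.
have -> : csum (fun i => csum (fun j =>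
    XY X Y i j * (nab i (nab j Z) I q - nab j (nab i Z) I q))) = P2 - Q2.
  rewrite /P2 /Q2 [X in _ = _ - X]exchange_csum -csumB.
  by apply: csum_ext => i; rewrite -csumB; apply: csum_ext => j; ring.
ring.
Qed.

Lemma Uf_vidx (X Y : field J tp vec_ty) k :
  vcomp (Uf J tp Ups cc A Ab Gam X Y) k q
  = dU X Y k
  + csum (fun i => csum (fun j => RtoC (cc k i j q.1) * XY X Y i j)).
Proof.
have nabV_vidx (U V : field J tp vec_ty) : nabV U V (vidx k) q
    = csum (fun j => vcomp U j q * Dop j (vcomp V k) q)
    + csum (fun i => csum (fun j => Gam i k j q * vcomp U i q * vcomp V j q)).
  rewrite nabVE -csumD; apply: csum_ext => i.
  by rewrite /Defs.nab Lj_vidx Cmult_plus_distr_l csumMl; congr (_ + _); apply: csum_ext => j; ring.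
rewrite /vcomp /Uf !nabV_vidx /Tor; cbv zeta; rewrite vupper_vidx csumB.
have -> : forall a b c d e : C, a + c - (b + d) - e = (a - b) + (c - d - e) by move=> *; ring.
congr (_ + _); rewrite [X in _ - X - _]exchange_csum -!csumB; apply: csum_ext => i.
by rewrite -!csumB; apply: csum_ext => j; rewrite /vcomp; ring.
Qed.

Lemma Lop_Nc t (X Y : field J tp vec_ty) (W : midx t -> C) I :
  Lop (fun p r => Nc J tp Ups cc A Ab Gam A X Y p r q)
      (fun p r => Nc J tp Ups cc A Ab Gam Ab X Y p r q)
      (fun p r => Nc J tp Ups cc A Ab Gam Gam X Y p r q) W I
  = csum (fun i => csum (fun j => XY X Y i j * LR i j W I)).
Proof.
have NcE n (B : 'I_4 -> 'I_n -> 'I_n -> pt -> C) x y :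
    Nc J tp Ups cc A Ab Gam B X Y x y q
    = csum (fun i => vcomp X i q * csum (fun j =>
        vcomp Y j q * Rc J tp Ups cc A Ab Gam B x y i j q)).
  by apply: csum_ext => i; rewrite csumMl; apply: csum_ext => j; ring.
rewrite (eq_Lop _ _ _ _ _ _ _ _ W _ (NcE _ A) (NcE _ Ab) (NcE _ Gam)) // Lop_sumM.
apply: csum_ext => i; rewrite Lop_sumM csumMl; apply: csum_ext => j; ring.
Qed.

Lemma curv_coef_sum i j F :
  csum (fun e => curv_coef i j e * basis_der e F q)
  = csum (fun c => curv_coef i j (inr (inl c)) * basis_der (inr (inl c)) F q)
  + csum (fun y => curv_coef i j (inr (inr y)) * basis_der (inr (inr y)) F q).
Proof.
rewrite csum_sum csum_sum (_ : csum (fun k : 'I_4 => _) = RtoC 0) ?Cplus_0_l //.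
by rewrite -(csum0 'I_4); apply: csum_ext => k /=; ring.
Qed.

Lemma vnab_UQ_sum t (X Y : field J tp vec_ty) (Z : field J tp t) I :
  csumo (fun Q => vnab J tp Q (UQ J tp Ups cc A Ab Gam X Y Q) Z I q)
  + csumo (fun Q => vnabb J tp Q (UbQ J tp Ups cc A Ab Gam X Y Q) Z I q)
  = csum (fun i => csum (fun j =>
      XY X Y i j * csum (fun e => curv_coef i j e * basis_der e (Z I) q))).
Proof.
have neg_sum (F : 'I_4 -> 'I_4 -> C) :
    - csum (fun i => csum (fun j => XY X Y i j * F i j))
    = csum (fun i => csum (fun j => XY X Y i j * - F i j)).
  by rewrite csumN; apply: csum_ext => i; rewrite csumN; apply: csum_ext => j; ring.
under [in RHS]csum_ext => i do under csum_ext => j do rewrite curv_coef_sum Cmult_plus_distr_l.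
under [in RHS]csum_ext => i do rewrite csumD.
rewrite csumD !csumoE /vnab /vnabb /UQ /UbQ /DN /Lf; congr (_ + _).
- under csum_ext => Q do under csum_ext => I' do rewrite Lop_Nc neg_sum.
  rewrite csum_weighted_exchange; do 2 apply: csum_ext => ?.
  by rewrite csum_sig.
- under csum_ext => Q do under csum_ext => I' do rewrite Lop_Nc neg_sum.
  rewrite csum_weighted_exchange; do 2 apply: csum_ext => ?.
  by rewrite csum_sig.
Qed.

Lemma nabV_Uf t (X Y : field J tp vec_ty) (Z : field J tp t) I :
  nabV (Uf J tp Ups cc A Ab Gam X Y) Z I q
  = csum (fun k => dU X Y k * nab k Z I q)
  + csum (fun i => csum (fun j =>
      XY X Y i j * csum (fun m => RtoC (cc m i j q.1) * nab m Z I q))).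
Proof.
rewrite nabVE; under csum_ext => k do rewrite Uf_vidx Cmult_plus_distr_r.
rewrite csumD; congr (_ + _).
under csum_ext => k do (rewrite csumMr; under csum_ext => i do rewrite csumMr).
rewrite exchange_csum; apply: csum_ext => i; rewrite exchange_csum; apply: csum_ext => j.
by rewrite csumMl; apply: csum_ext => m; ring.
Qed.

Lemma nabV_commutator t (X Y : field J tp vec_ty) (Z : field J tp t) I :
  (forall I', smooth (X I')) -> (forall I', smooth (Y I')) -> (forall I', smooth (Z I')) ->
  nabV X (nabV Y Z) I q - nabV Y (nabV X Z) I q
  = nabV (Uf J tp Ups cc A Ab Gam X Y) Z I q
  + csumo (fun Q => vnab J tp Q (UQ J tp Ups cc A Ab Gam X Y Q) Z I q)
  + csumo (fun Q => vnabb J tp Q (UbQ J tp Ups cc A Ab Gam X Y Q) Z I q)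
  + DN J tp Ups cc A Ab Gam X Y Z I q.
Proof.
move=> sX sY sZ.
rewrite -(Cplus_assoc (nabV _ _ _ _)) vnab_UQ_sum /Defs.DN /Lf Lop_Nc nabV_Uf.
rewrite nabV_commutator_expand //.
under [X in _ + X]csum_ext => i do
  under csum_ext => j do rewrite nab_commutator // 2!Cmult_plus_distr_l.
under [X in _ + X]csum_ext => i do rewrite 2!csumD.
rewrite 2!csumD; ring.
Qed.

End AtPoint.
End Chart.

Theorem mainTheorem9 (J : nat) (tp : 'I_J -> stype)
  (Ux : ('I_4 -> R) -> Prop)
  (Ups : 'I_4 -> 'I_4 -> ('I_4 -> R) -> R)
  (cc : 'I_4 -> 'I_4 -> 'I_4 -> ('I_4 -> R) -> R)
  (A Ab : 'I_4 -> 'I_2 -> 'I_2 -> pt J tp -> C)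
  (Gam : 'I_4 -> 'I_4 -> 'I_4 -> pt J tp -> C)
  (X Y : field J tp vec_ty) :
  open Ux ->
  frame_on Ux Ups ->
  bracket_rel Ux Ups cc ->
  (forall k i, smooth_on J tp (fun q => Ux q.1) (fun q => RtoC (Ups k i q.1))) ->
  (forall j k i, smooth_on J tp (fun q => Ux q.1) (A j k i)) ->
  (forall j k i, smooth_on J tp (fun q => Ux q.1) (Ab j k i)) ->
  (forall j k i, smooth_on J tp (fun q => Ux q.1) (Gam j k i)) ->
  (forall I, smooth_on J tp (fun q => Ux q.1) (X I)) ->
  (forall I, smooth_on J tp (fun q => Ux q.1) (Y I)) ->
  forall (t : stype) (Z : field J tp t),
  (forall I, smooth_on J tp (fun q => Ux q.1) (Z I)) ->
  forall (I : midx t) (q : pt J tp), Ux q.1 ->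
    nabV J tp Ups A Ab Gam X (nabV J tp Ups A Ab Gam Y Z) I q
  - nabV J tp Ups A Ab Gam Y (nabV J tp Ups A Ab Gam X Z) I q
  = nabV J tp Ups A Ab Gam (Uf J tp Ups cc A Ab Gam X Y) Z I q
  + csumo (fun Q : 'I_J => vnab J tp Q (UQ J tp Ups cc A Ab Gam X Y Q) Z I q)
  + csumo (fun Q : 'I_J => vnabb J tp Q (UbQ J tp Ups cc A Ab Gam X Y Q) Z I q)
  + DN J tp Ups cc A Ab Gam X Y Z I q.
Proof.
move=> open_Ux _ bracket sUps sA sAb sGam sX sY t Z sZ I q Uq.
exact: (nabV_commutator _ _ _ _ _ _ _ _ open_Ux bracket sUps sA sAb sGam q Uq t X Y Z I sX sY sZ).
Qed.
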